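(* For all $\lambda j$-terms $t$, $u_1,\dots,u_m$ ($m\ge1$), $v_1,\dots,v_n$ ($n\ge0$) and pairwise distinct variables $x_1,\dots,x_m$ such that no $x_i$ is free in any $u_j$: if $u_1,\dots,u_m$ are $\lambda j$-strongly normalizing and $t\{x_1/u_1\}\cdots\{x_m/u_m\}\,v_1\cdots v_n$ is $\lambda j$-strongly normalizing, then $t[x_1/u_1]\cdots[x_m/u_m]\,v_1\cdots v_n$ is $\lambda j$-strongly normalizing.
   Context: $\lambda j$-terms are generated by $t,u::= x\mid \lambda x.t\mid t\,u\mid t[x/u]$ ($x$ ranging over variables); $\lambda x.t$ and $t[x/u]$ bind $x$ in $t$ (not in $u$), and terms are considered modulo $\alpha$-conversion. $\mathrm{fv}(t)$ is the set of free variables, $t\{x/u\}$ is capture-avoiding meta-level substitution, and $|t|_x$ is the number of free occurrences of $x$ in $t$. Application associates to the left: $t\,v_1\cdots v_n=(\dots(t\,v_1)\dots)v_n$. If $|t|_x=n\ge2$, $t_{[y]_x}$ denotes any term obtained from $t$ by replacing $k$ of the free occurrences of $x$ by a fresh variable $y$, for some $1\le k\le n-1$. ${\tt L}$ denotes a (possibly empty) list of jumps $[x_1/u_1]\dots[x_k/u_k]$. The rewriting rules, closed under all contexts, are: $({\tt dB})$ $(\lambda x.t){\tt L}\,u\to t[x/u]{\tt L}$ where no $x_i$ of ${\tt L}$ is free in $u$; $({\tt w})$ $t[x/u]\to t$ if $|t|_x=0$; $({\tt d})$ $t[x/u]\to t\{x/u\}$ if $|t|_x=1$; $({\tt c})$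 $t[x/u]\to t_{[y]_x}[x/u][y/u]$ if $|t|_x\ge2$, $y$ fresh. $\to_{\lambda j}$ is the union of all four. A term is $\lambda j$-strongly normalizing if it has no infinite $\to_{\lambda j}$-reduction sequence. *)

(* The lambda-j calculus in the locally nameless style:
   free variables are names (nat), bound variables are de Bruijn indices,
   so alpha-equivalent terms are syntactically equal.  lambda-j terms are
   the locally closed raw terms ([lc]). *)
From Stdlib Require Import Arith List.
Import ListNotations.

Definition var := nat.

(* [abs t] is  \x.t  and  [jsub t u]  is  t[x/u]; in both cases bound index 0
   of the body t refers to the bound variable x; u is outside the binder. *)
Inductive term : Type :=
| bvar (i : nat)
| fvar (x : var)
| abs  (t : term)
| app  (t u : term)
| jsub (t u : term).

Fixpoint open_rec (k : nat) (u : term) (t : term) : term :=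
  match t with
  | bvar i => if Nat.eqb k i then u else bvar i
  | fvar x => fvar x
  | abs t1 => abs (open_rec (S k) u t1)
  | app t1 t2 => app (open_rec k u t1) (open_rec k u t2)
  | jsub t1 t2 => jsub (open_rec (S k) u t1) (open_rec k u t2)
  end.
Definition open (t u : term) : term := open_rec 0 u t.

Fixpoint close_rec (k : nat) (x : var) (t : term) : term :=
  match t with
  | bvar i => bvar i
  | fvar y => if Nat.eqb x y then bvar k else fvar y
  | abs t1 => abs (close_rec (S k) x t1)
  | app t1 t2 => app (close_rec k x t1) (close_rec k x t2)
  | jsub t1 t2 => jsub (close_rec (S k) x t1) (close_rec k x t2)
  end.
Definition close (x : var) (t : term) : term := close_rec 0 x t.

Fixpoint fv (t : term) : list var :=
  match t with
  | bvar _ => []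
  | fvar x => [x]
  | abs t1 => fv t1
  | app t1 t2 => fv t1 ++ fv t2
  | jsub t1 t2 => fv t1 ++ fv t2
  end.

Fixpoint occ (x : var) (t : term) : nat :=
  match t with
  | bvar _ => 0
  | fvar y => if Nat.eqb x y then 1 else 0
  | abs t1 => occ x t1
  | app t1 t2 => occ x t1 + occ x t2
  | jsub t1 t2 => occ x t1 + occ x t2
  end.

(* meta-level substitution t{x/u} (capture avoiding for locally closed u) *)
Fixpoint subst (x : var) (u : term) (t : term) : term :=
  match t with
  | bvar i => bvar i
  | fvar y => if Nat.eqb x y then u else fvar y
  | abs t1 => abs (subst x u t1)
  | app t1 t2 => app (subst x u t1) (subst x u t2)
  | jsub t1 t2 => jsub (subst x u t1) (subst x u t2)
  end.

Inductive lc : term -> Prop :=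
| lc_var : forall x, lc (fvar x)
| lc_abs : forall (L : list var) t,
    (forall x, ~ In x L -> lc (open t (fvar x))) -> lc (abs t)
| lc_app : forall t u, lc t -> lc u -> lc (app t u)
| lc_jsub : forall (L : list var) t u,
    (forall x, ~ In x L -> lc (open t (fvar x))) -> lc u -> lc (jsub t u).

Inductive rename_some (x y : var) : term -> term -> Prop :=
| rs_hit : rename_some x y (fvar x) (fvar y)
| rs_refl : forall t, rename_some x y t t
| rs_abs : forall t t', rename_some x y t t' -> rename_some x y (abs t) (abs t')
| rs_app : forall t1 t1' t2 t2', rename_some x y t1 t1' -> rename_some x y t2 t2' ->
    rename_some x y (app t1 t2) (app t1' t2')
| rs_jsub : forall t1 t1' t2 t2', rename_some x y t1 t1' -> rename_some x y t2 t2' ->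
    rename_some x y (jsub t1 t2) (jsub t1' t2').

(* list of jumps: jumps [u1;...;uk] t = t[x1/u1]...[xk/uk] (binders anonymous) *)
Fixpoint jumps (L : list term) (t : term) : term :=
  match L with
  | [] => t
  | u :: L' => jumps L' (jsub t u)
  end.

(* In the rules for a jump t[x/u] we pick a name x fresh for t and u (any
   such choice is an alpha-renaming) and work with the named body
   s := open t (fvar x). *)
Inductive red : term -> term -> Prop :=
| red_dB : forall L t u,
    lc (app (jumps L (abs t)) u) ->
    red (app (jumps L (abs t)) u) (jumps L (jsub t u))
| red_w : forall t u x,
    lc (jsub t u) -> ~ In x (fv t ++ fv u) ->
    occ x (open t (fvar x)) = 0 ->
    red (jsub t u) (open t (fvar x))
| red_d : forall t u x,
    lc (jsub t u) -> ~ In x (fv t ++ fv u) ->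
    occ x (open t (fvar x)) = 1 ->
    red (jsub t u) (subst x u (open t (fvar x)))
| red_c : forall t u x y s',
    lc (jsub t u) -> ~ In x (fv t ++ fv u) -> ~ In y (fv t ++ fv u) -> x <> y ->
    2 <= occ x (open t (fvar x)) ->
    rename_some x y (open t (fvar x)) s' ->
    1 <= occ y s' -> occ y s' <= occ x (open t (fvar x)) - 1 ->
    (* t_{[y]_x}[x/u][y/u] *)
    red (jsub t u) (jsub (close y (jsub (close x s') u)) u)
| red_abs : forall (L : list var) t t',
    (forall x, ~ In x L -> red (open t (fvar x)) (open t' (fvar x))) ->
    red (abs t) (abs t')
| red_app_l : forall t t' u, red t t' -> lc u -> red (app t u) (app t' u)
| red_app_r : forall t u u', lc t -> red u u' -> red (app t u) (app t u')
| red_jsub_l : forall (L : list var) t t' u,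
    (forall x, ~ In x L -> red (open t (fvar x)) (open t' (fvar x))) -> lc u ->
    red (jsub t u) (jsub t' u)
| red_jsub_r : forall (L : list var) t u u',
    (forall x, ~ In x L -> lc (open t (fvar x))) -> red u u' ->
    red (jsub t u) (jsub t u').

Definition SN (t : term) : Prop := Acc (fun a b => red b a) t.

Fixpoint app_list (t : term) (vs : list term) : term :=
  match vs with
  | [] => t
  | v :: vs' => app_list (app t v) vs'
  end.

Fixpoint msubst (s : list (var * term)) (t : term) : term :=
  match s with
  | [] => t
  | (x, u) :: s' => msubst s' (subst x u t)
  end.

Fixpoint mjump (s : list (var * term)) (t : term) : term :=
  match s with
  | [] => t
  | (x, u) :: s' => mjump s' (jsub (close x t) u)
  end.

(* A configuration (s, t, vs), with s = [(x1,u1);...;(xm,um)], denotes the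
   term J = t[x1/u1]...[xm/um] v1...vn and its "unfolding"
   S = t{x1/u1}...{xm/um} v1...vn.  For configurations whose u_i are SN we
   prove SN J by well-founded induction on the lexicographic combination of
   (1) S, ordered by reduction (well founded since S is SN), and
   (2) the multiset of pairs (u_i, |t|_{x_i}), ordered by the multiset
       extension of "u reduces, or u is unchanged and the count decreases".
   Every step from J leads to the J' of a new configuration: a step inside t,
   inside a v_j or a dB step at the head makes S reduce; a step inside some
   u_i makes S reduce in zero or more steps (the multiset decreases otherwise);
   and a w-, d- or c-step on a jump leaves S unchanged while the multiset
   decreases (c splits (u, n) into (u, n1), (u, n2) with n1, n2 < n). *)

From Pilot Require Import Defs.
From Stdlib Require Import Arith List Lia Relations Wellfounded.
Import ListNotations.
Import Defs.

(* [lc_at k t]: every dangling bound index of [t] is below [k]; [lc_at 0]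
   is a structurally recursive characterisation of [lc] (lemma [lc_iff]). *)
Fixpoint lc_at (k : nat) (t : term) : Prop :=
  match t with
  | bvar i => i < k
  | fvar _ => True
  | abs t1 => lc_at (S k) t1
  | app a b => lc_at k a /\ lc_at k b
  | jsub a b => lc_at (S k) a /\ lc_at k b
  end.

(* [bocc k t]: number of occurrences of the bound index [k] in [t]; for the
   body [t] of a binder, [bocc 0 t] is the number of occurrences of the bound
   variable, i.e. the quantity [|t|_x] tested by the rules w, d and c. *)
Fixpoint bocc (k : nat) (t : term) : nat :=
  match t with
  | bvar i => if Nat.eqb k i then 1 else 0
  | fvar _ => 0
  | abs t1 => bocc (S k) t1
  | app a b => bocc k a + bocc k b
  | jsub a b => bocc (S k) a + bocc k b
  end.

Fixpoint size (t : term) : nat :=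
  match t with
  | bvar _ | fvar _ => 1
  | abs a => S (size a)
  | app a b | jsub a b => S (size a + size b)
  end.

Ltac case_eqb := repeat (match goal with
  | |- context [Nat.eqb ?a ?b] => destruct (Nat.eqb_spec a b); subst
  | H : context [Nat.eqb ?a ?b] |- _ => destruct (Nat.eqb_spec a b); subst
  end; simpl in *; try congruence).

Ltac name_cases := case_eqb; rewrite ?Nat.eqb_refl; auto; try tauto; try lia.

Ltac in_app := simpl in *; repeat rewrite in_app_iff in *; simpl in *.

Lemma fresh_ex (L : list var) : exists x, ~ In x L.
Proof.
  exists (S (fold_right max 0 L)).
  assert (H : forall y, In y L -> y <= fold_right max 0 L).
  { induction L as [|a L IH]; simpl; intros y Hy; [easy|].
    destruct Hy as [<-|Hy]; [lia|specialize (IH _ Hy); lia]. }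
  intro Hi; apply H in Hi; lia.
Qed.

Lemma lc_at_mono t : forall k k', lc_at k t -> k <= k' -> lc_at k' t.
Proof.
  induction t; simpl; intros k k' H Hk; try lia; auto.
  - eapply IHt; eauto; lia.
  - destruct H; split; eauto.
  - destruct H; split; [eapply IHt1|eapply IHt2]; eauto; lia.
Qed.

Lemma lc_at_0 t k : lc_at 0 t -> lc_at k t.
Proof. intros; eapply lc_at_mono; eauto; lia. Qed.

Lemma open_lc_at t : forall k u, lc_at k t -> open_rec k u t = t.
Proof.
  induction t; simpl; intros k u H; f_equal; intuition eauto.
  case_eqb; lia.
Qed.

Lemma open_lc_at_lower t : forall k u,
  lc_at (S k) t -> lc_at k u -> lc_at k (open_rec k u t).
Proof.
  induction t; simpl; intros k u H Hu; intuition eauto using lc_at_mono.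
  case_eqb; lia.
Qed.

Lemma lc_at_open_inv t : forall k u, lc_at k (open_rec k u t) -> lc_at (S k) t.
Proof. induction t; simpl; intros; intuition eauto. revert H; case_eqb; lia. Qed.

Lemma close_lc_at t : forall k x, lc_at k t -> lc_at (S k) (close_rec k x t).
Proof. induction t; simpl; intros; intuition eauto. case_eqb; lia. Qed.

Lemma subst_lc_at t : forall k x u, lc_at k t -> lc_at 0 u -> lc_at k (subst x u t).
Proof. induction t; simpl; intros; intuition eauto. case_eqb; auto using lc_at_0. Qed.

Lemma lc_at_bocc t : forall k, lc_at (S k) t -> bocc k t = 0 -> lc_at k t.
Proof.
  induction t; simpl; intros k H H0.
  - revert H0; case_eqb; lia.
  - auto.
  - auto.
  - split; [apply IHt1|apply IHt2]; tauto || lia.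
  - split; [apply IHt1|apply IHt2]; tauto || lia.
Qed.

Lemma bocc_lc_at t : forall k j, lc_at k t -> k <= j -> bocc j t = 0.
Proof.
  induction t; simpl; intros k j H Hj; try lia.
  - case_eqb; lia.
  - eapply IHt; eauto; lia.
  - erewrite IHt1, IHt2; intuition eauto.
  - erewrite (IHt1 (S k)), (IHt2 k); intuition eauto; lia.
Qed.

Lemma fv_close t : forall k x y, In y (fv (close_rec k x t)) <-> In y (fv t) /\ y <> x.
Proof.
  induction t; simpl; intros; rewrite ?in_app_iff, ?IHt1, ?IHt2, ?IHt; try tauto.
  case_eqb; intuition congruence.
Qed.

Lemma fv_open t : forall k u y,
  In y (fv (open_rec k u t)) -> In y (fv t) \/ In y (fv u).
Proof.
  induction t; simpl; intros k u y H; rewrite ?in_app_iff in *.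
  - revert H; case_eqb; tauto.
  - tauto.
  - eauto.
  - destruct H as [H|H]; [destruct (IHt1 _ _ _ H)|destruct (IHt2 _ _ _ H)]; tauto.
  - destruct H as [H|H]; [destruct (IHt1 _ _ _ H)|destruct (IHt2 _ _ _ H)]; tauto.
Qed.

Lemma fv_open_var t k x y : In y (fv (open_rec k (fvar x) t)) -> In y (fv t) \/ y = x.
Proof. intros H. apply fv_open in H. simpl in H. intuition. Qed.

Lemma fv_open_incl t : forall k u y, In y (fv t) -> In y (fv (open_rec k u t)).
Proof. induction t; simpl; intros; rewrite ?in_app_iff in *; intuition eauto. Qed.

Lemma fv_subst t : forall x u y,
  In y (fv (subst x u t)) -> (In y (fv t) /\ y <> x) \/ In y (fv u).
Proof.
  induction t; simpl; intros x0 u y H; rewrite ?in_app_iff in *.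
  - tauto.
  - revert H; case_eqb; intuition congruence.
  - eauto.
  - destruct H as [H|H]; [destruct (IHt1 _ _ _ H)|destruct (IHt2 _ _ _ H)]; tauto.
  - destruct H as [H|H]; [destruct (IHt1 _ _ _ H)|destruct (IHt2 _ _ _ H)]; tauto.
Qed.

Lemma subst_fresh t : forall x u, ~ In x (fv t) -> subst x u t = t.
Proof.
  induction t; simpl; intros; rewrite ?in_app_iff in *; f_equal; intuition eauto.
  case_eqb; tauto.
Qed.

Lemma close_fresh t : forall k x, ~ In x (fv t) -> close_rec k x t = t.
Proof.
  induction t; simpl; intros; rewrite ?in_app_iff in *; f_equal; intuition eauto.
  case_eqb; tauto.
Qed.

Lemma subst_open t : forall k x u w, lc_at 0 u ->
  subst x u (open_rec k w t) = open_rec k (subst x u w) (subst x u t).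
Proof.
  induction t; simpl; intros; f_equal; auto.
  - case_eqb; auto.
  - case_eqb; auto. rewrite open_lc_at; auto using lc_at_0.
Qed.

Lemma subst_open_var t k x u z : lc_at 0 u -> x <> z ->
  subst x u (open_rec k (fvar z) t) = open_rec k (fvar z) (subst x u t).
Proof. intros. rewrite subst_open; auto. simpl. case_eqb; auto. Qed.

Lemma subst_intro t : forall k x u, ~ In x (fv t) ->
  subst x u (open_rec k (fvar x) t) = open_rec k u t.
Proof.
  induction t; simpl; intros; rewrite ?in_app_iff in *; f_equal; intuition eauto.
  all: name_cases.
Qed.

Lemma open_close t : forall k x w, lc_at k t ->
  open_rec k w (close_rec k x t) = subst x w t.
Proof.
  induction t; simpl; intros; f_equal; intuition eauto.
  all: name_cases.
Qed.

Lemma close_open t : forall k x, ~ In x (fv t) ->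
  close_rec k x (open_rec k (fvar x) t) = t.
Proof.
  induction t; simpl; intros; rewrite ?in_app_iff in *; f_equal; intuition eauto.
  all: name_cases.
Qed.

Lemma close_rename t : forall k x y, ~ In y (fv t) ->
  close_rec k x t = close_rec k y (subst x (fvar y) t).
Proof.
  induction t; simpl; intros; rewrite ?in_app_iff in *; f_equal; intuition eauto.
  all: name_cases.
Qed.

Lemma subst_close t : forall k x z w, z <> x -> ~ In x (fv w) ->
  subst z w (close_rec k x t) = close_rec k x (subst z w t).
Proof.
  induction t; simpl; intros; f_equal; intuition eauto.
  case_eqb; auto; rewrite close_fresh; auto.
Qed.

Lemma subst_id t z : subst z (fvar z) t = t.
Proof. induction t; simpl; f_equal; auto. case_eqb; auto. Qed.

Lemma subst_var_back t : forall x z, ~ In z (fv t) ->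
  subst z (fvar x) (subst x (fvar z) t) = t.
Proof.
  induction t; simpl; intros; rewrite ?in_app_iff in *; f_equal; intuition eauto.
  all: name_cases.
Qed.

Lemma subst_rename_var t : forall x x' u, ~ In x' (fv t) ->
  subst x' u (subst x (fvar x') t) = subst x u t.
Proof.
  induction t; simpl; intros; rewrite ?in_app_iff in *; f_equal; intuition eauto.
  all: name_cases.
Qed.

Lemma subst_subst t : forall x u z w, x <> z -> ~ In x (fv w) -> ~ In z (fv u) ->
  subst z w (subst x u t) = subst x u (subst z w t).
Proof.
  induction t; simpl; intros; try (f_equal; auto; fail).
  case_eqb; rewrite ?Nat.eqb_refl; auto; try (rewrite subst_fresh; auto).
Qed.

Lemma occ_fv t : forall x, occ x t = 0 <-> ~ In x (fv t).
Proof.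
  induction t; simpl; intros x0; rewrite ?in_app_iff.
  - tauto.
  - case_eqb; intuition (lia || congruence).
  - apply IHt.
  - specialize (IHt1 x0); specialize (IHt2 x0).
    destruct (occ x0 t1), (occ x0 t2); intuition lia.
  - specialize (IHt1 x0); specialize (IHt2 x0).
    destruct (occ x0 t1), (occ x0 t2); intuition lia.
Qed.

Lemma occ_open_var t : forall k z, occ z (open_rec k (fvar z) t) = occ z t + bocc k t.
Proof. induction t; simpl; intros; rewrite ?IHt1, ?IHt2, ?IHt; try lia. name_cases. Qed.

Lemma occ_open_fresh t z : ~ In z (fv t) -> occ z (open t (fvar z)) = bocc 0 t.
Proof. intros H. unfold open; rewrite occ_open_var. apply occ_fv in H. lia. Qed.

Lemma bocc_close t : forall k x, bocc k (close_rec k x t) = bocc k t + occ x t.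
Proof. induction t; simpl; intros; rewrite ?IHt1, ?IHt2, ?IHt; try lia. name_cases. Qed.

Lemma occ_close t : forall k x y, y <> x -> occ y (close_rec k x t) = occ y t.
Proof. induction t; simpl; intros; rewrite ?IHt1, ?IHt2, ?IHt; auto. name_cases. Qed.

Lemma bocc_subst t : forall k x u, lc_at 0 u -> bocc k (subst x u t) = bocc k t.
Proof.
  induction t; simpl; intros; rewrite ?IHt1, ?IHt2, ?IHt; auto.
  case_eqb; eauto using bocc_lc_at with arith.
Qed.

Lemma occ_subst_other t : forall x u y, y <> x -> ~ In y (fv u) ->
  occ y (subst x u t) = occ y t.
Proof.
  induction t; simpl; intros; rewrite ?IHt1, ?IHt2, ?IHt; auto.
  case_eqb; apply occ_fv; auto.
Qed.

Lemma occ_subst_var t : forall x y, y <> x ->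
  occ y (subst x (fvar y) t) = occ y t + occ x t.
Proof. induction t; simpl; intros; rewrite ?IHt1, ?IHt2, ?IHt; try lia. name_cases. Qed.

Lemma size_open_var t : forall k z, size (open_rec k (fvar z) t) = size t.
Proof. induction t; simpl; intros; auto. case_eqb; auto. Qed.

Lemma lc_lc_at t : lc t -> lc_at 0 t.
Proof.
  induction 1; simpl; auto.
  - destruct (fresh_ex L) as [x Hx]. eapply lc_at_open_inv; eauto.
  - destruct (fresh_ex L) as [x Hx]. split; auto. eapply lc_at_open_inv; eauto.
Qed.

Lemma lc_at_lc : forall n t, size t <= n -> lc_at 0 t -> lc t.
Proof.
  induction n; intros t Hs Hl; destruct t; simpl in *; try lia; try constructor; intuition.
  - apply lc_abs with (L := []). intros x _. apply IHn.
    + unfold open; rewrite size_open_var; lia.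
    + apply open_lc_at_lower; simpl; auto.
  - apply IHn; auto; lia.
  - apply IHn; auto; lia.
  - apply lc_jsub with (L := []).
    + intros x _. apply IHn.
      * unfold open; rewrite size_open_var; lia.
      * apply open_lc_at_lower; simpl; auto.
    + apply IHn; auto; lia.
Qed.

Lemma lc_iff t : lc t <-> lc_at 0 t.
Proof. split; [apply lc_lc_at|apply lc_at_lc with (n := size t); auto]. Qed.

Lemma rename_fresh x y t t' : rename_some x y t t' -> ~ In x (fv t) -> t' = t.
Proof. induction 1; simpl; intros; rewrite ?in_app_iff in *; try f_equal; intuition. Qed.

Lemma rename_lc_at x y t t' : rename_some x y t t' -> forall k, lc_at k t -> lc_at k t'.
Proof. induction 1; simpl; intros; intuition. Qed.

Lemma rename_fv x y t t' : rename_some x y t t' ->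
  forall z, In z (fv t') -> In z (fv t) \/ z = y.
Proof.
  induction 1; simpl; intros z Hz; rewrite ?in_app_iff in *; intuition.
  - destruct (IHrename_some1 _ H1); tauto.
  - destruct (IHrename_some2 _ H1); tauto.
  - destruct (IHrename_some1 _ H1); tauto.
  - destruct (IHrename_some2 _ H1); tauto.
Qed.

Lemma rename_occ_other x y t t' : rename_some x y t t' ->
  forall z, z <> x -> z <> y -> occ z t' = occ z t.
Proof. induction 1; simpl; intros; auto. case_eqb. Qed.

Lemma rename_occ_sum x y t t' : rename_some x y t t' -> x <> y ->
  occ x t' + occ y t' = occ x t + occ y t.
Proof.
  induction 1; simpl; intros; auto.
  all: try (specialize (IHrename_some1 H1); specialize (IHrename_some2 H1); lia).
  case_eqb.
Qed.

Lemma rename_subst_var x y t t' : rename_some x y t t' -> forall a b,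
  rename_some (if Nat.eqb a x then b else x) (if Nat.eqb a y then b else y)
    (subst a (fvar b) t) (subst a (fvar b) t').
Proof.
  induction 1; simpl; intros; try (constructor; auto; fail).
  destruct (Nat.eqb a x), (Nat.eqb a y); constructor.
Qed.

Lemma rename_subst x y t t' : rename_some x y t t' -> forall a w, a <> x -> a <> y ->
  rename_some x y (subst a w t) (subst a w t').
Proof.
  induction 1; simpl; intros; try (constructor; auto; fail).
  case_eqb; constructor.
Qed.

Lemma rename_subst_back x y t t' : rename_some x y t t' -> forall u,
  ~ In y (fv t) -> ~ In y (fv u) -> subst y u (subst x u t') = subst x u t.
Proof.
  induction 1; simpl; intros u Ht Hu; rewrite ?in_app_iff in *.
  - case_eqb; rewrite ?Nat.eqb_refl; apply subst_fresh; auto.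
  - apply subst_fresh. intro H; apply fv_subst in H. tauto.
  - f_equal; auto.
  - f_equal; [apply IHrename_some1|apply IHrename_some2]; tauto.
  - f_equal; [apply IHrename_some1|apply IHrename_some2]; tauto.
Qed.

Lemma rename_close_inv x y z t : forall k s, rename_some x y (close_rec k z t) s ->
  x <> z -> y <> z -> exists t', s = close_rec k z t' /\ rename_some x y t t'.
Proof.
  induction t; simpl; intros k s H Hx Hy.
  - inversion H; subst. exists (bvar i); split; auto; apply rs_refl.
  - revert H; destruct (Nat.eqb_spec z x0); intro H.
    + inversion H; subst. exists (fvar x0); simpl; rewrite Nat.eqb_refl; split; auto; apply rs_refl.
    + inversion H; subst.
      * exists (fvar y); simpl. destruct (Nat.eqb_spec z y); try congruence. split; auto.
      * exists (fvar x0); simpl. destruct (Nat.eqb_spec z x0); try congruence. split; auto.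
  - inversion H; subst.
    + exists (abs t); split; auto; apply rs_refl.
    + destruct (IHt _ _ H1 Hx Hy) as [t1 [-> ?]]. exists (abs t1); split; auto; constructor; auto.
  - inversion H; subst.
    + exists (app t1 t2); split; auto; apply rs_refl.
    + destruct (IHt1 _ _ H2 Hx Hy) as [a [-> ?]]. destruct (IHt2 _ _ H4 Hx Hy) as [b [-> ?]].
      exists (app a b); split; auto; constructor; auto.
  - inversion H; subst.
    + exists (jsub t1 t2); split; auto; apply rs_refl.
    + destruct (IHt1 _ _ H2 Hx Hy) as [a [-> ?]]. destruct (IHt2 _ _ H4 Hx Hy) as [b [-> ?]].
      exists (jsub a b); split; auto; constructor; auto.
Qed.

Lemma jumps_app L1 : forall L2 X, jumps (L1 ++ L2) X = jumps L2 (jumps L1 X).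
Proof. induction L1; simpl; auto. Qed.

Lemma jumps_lc A B : (forall k, lc_at k A -> lc_at k B) ->
  forall L k, lc_at k (jumps L A) -> lc_at k (jumps L B).
Proof.
  intros H L; revert A B H; induction L; simpl; intros; auto.
  apply (IHL (jsub A a)); auto. simpl; intuition.
Qed.

Lemma jumps_fv L : forall X y,
  In y (fv (jumps L X)) <-> In y (fv X) \/ exists l, In l L /\ In y (fv l).
Proof.
  induction L; simpl; intros. { firstorder. }
  rewrite IHL; simpl; rewrite in_app_iff. firstorder. subst; auto.
Qed.

Lemma jumps_subst L : forall X x w,
  subst x w (jumps L X) = jumps (map (subst x w) L) (subst x w X).
Proof. induction L; simpl; intros; auto. Qed.

Lemma jumps_snoc_inv L : forall b P Q, jumps L (abs b) = jsub P Q ->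
  exists L', L = L' ++ [Q] /\ jumps L' (abs b) = P.
Proof.
  induction L using rev_ind; simpl; intros. { discriminate. }
  rewrite jumps_app in H; simpl in H. inversion H; subst. eauto.
Qed.

Lemma jumps_abs_not_app L : forall b p q, jumps L (abs b) <> app p q.
Proof.
  induction L using rev_ind; simpl; intros; try discriminate.
  rewrite jumps_app; simpl; discriminate.
Qed.

Definition c_reduct (x y : var) (s' u : term) : term :=
  jsub (close y (jsub (close x s') u)) u.

Lemma red_w' t u : lc_at 0 (jsub t u) -> bocc 0 t = 0 -> red (jsub t u) t.
Proof.
  intros Hl Hb. destruct (fresh_ex (fv t ++ fv u)) as [z Hz].
  assert (E : open t (fvar z) = t).
  { apply open_lc_at. simpl in Hl. apply lc_at_bocc; intuition. }
  rewrite <- E at 2. apply red_w; [apply lc_iff; auto|auto|].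
  rewrite occ_open_fresh; auto. in_app; tauto.
Qed.

Lemma red_d' t u : lc_at 0 (jsub t u) -> bocc 0 t = 1 -> red (jsub t u) (open t u).
Proof.
  intros Hl Hb. destruct (fresh_ex (fv t ++ fv u)) as [z Hz].
  rewrite in_app_iff in Hz.
  change (open t u) with (open_rec 0 u t); rewrite <- (subst_intro t 0 z u) by tauto.
  apply red_d; [apply lc_iff; auto|rewrite in_app_iff; auto|].
  rewrite occ_open_fresh; tauto.
Qed.

Lemma red_c' t u x y s' : lc_at 0 (jsub t u) ->
  ~ In x (fv t ++ fv u) -> ~ In y (fv t ++ fv u) -> x <> y -> 2 <= bocc 0 t ->
  rename_some x y (open t (fvar x)) s' -> 1 <= occ y s' -> occ y s' <= bocc 0 t - 1 ->
  red (jsub t u) (c_reduct x y s' u).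
Proof.
  intros. assert (E : occ x (open t (fvar x)) = bocc 0 t).
  { apply occ_open_fresh. in_app; tauto. }
  apply red_c; rewrite ?E; auto. apply lc_iff; auto.
Qed.

Lemma red_jsub_inv t u h : red (jsub t u) h ->
  (exists z, ~ In z (fv t ++ fv u) /\ occ z (open t (fvar z)) = 0 /\ h = open t (fvar z)) \/
  (exists z, ~ In z (fv t ++ fv u) /\ occ z (open t (fvar z)) = 1 /\
     h = subst z u (open t (fvar z))) \/
  (exists z y s', ~ In z (fv t ++ fv u) /\ ~ In y (fv t ++ fv u) /\ z <> y /\
     2 <= occ z (open t (fvar z)) /\ rename_some z y (open t (fvar z)) s' /\
     1 <= occ y s' /\ occ y s' <= occ z (open t (fvar z)) - 1 /\ h = c_reduct z y s' u) \/
  (exists L t', (forall z, ~ In z L -> red (open t (fvar z)) (open t' (fvar z))) /\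
     h = jsub t' u) \/
  (exists u', red u u' /\ h = jsub t u').
Proof.
  intros H; inversion H; subst.
  - left; eexists; eauto.
  - right; left; eexists; eauto.
  - right; right; left; do 3 eexists; repeat split; eauto.
  - right; right; right; left; do 2 eexists; eauto.
  - right; right; right; right; eexists; eauto.
Qed.

Lemma red_lc s s' : red s s' -> lc_at 0 s /\ lc_at 0 s'.
Proof.
  induction 1 as [L t u Hlc|t u x Hlc Hx Hocc|t u x Hlc Hx Hocc
    |t u x y s' Hlc Hx Hy Hxy Hocc Hr Hy1 Hy2
    |L t t' Hred IH|t t' u Hred IH Hu|t u u' Ht Hred IH|L t t' u Hred IH Hu
    |L t u u' Ht Hred IH]; rewrite ?lc_iff in *; simpl in *.
  - split; auto. destruct Hlc. apply (jumps_lc (abs t)); auto.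
    intros k Hk; simpl in *; split; auto using lc_at_0.
  - split; auto. apply open_lc_at_lower; simpl; tauto.
  - split; auto. apply subst_lc_at; try tauto. apply open_lc_at_lower; simpl; tauto.
  - split; auto. unfold c_reduct, close; simpl. destruct Hlc as [H1 H2].
    assert (lc_at 0 s') by (eapply rename_lc_at; eauto; apply open_lc_at_lower; simpl; auto).
    repeat split; auto using close_lc_at.
  - destruct (fresh_ex L) as [z Hz]. destruct (IH z Hz). split; eapply lc_at_open_inv; eauto.
  - tauto.
  - tauto.
  - destruct (fresh_ex L) as [z Hz]. destruct (IH z Hz).
    split; split; auto; eapply lc_at_open_inv; eauto.
  - destruct (fresh_ex L) as [z Hz]. specialize (Ht z Hz). rewrite lc_iff in Ht.
    split; split; try tauto; eapply lc_at_open_inv; eauto.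
Qed.

Lemma red_lc_r s s' : red s s' -> lc_at 0 s'.
Proof. apply red_lc. Qed.

Lemma red_fv s s' : red s s' -> forall v, In v (fv s') -> In v (fv s).
Proof.
  induction 1 as [L t u Hlc|t u x Hlc Hx Hocc|t u x Hlc Hx Hocc
    |t u x y s' Hlc Hx Hy Hxy Hocc Hr Hy1 Hy2
    |L t t' Hred IH|t t' u Hred IH Hu|t u u' Ht Hred IH|L t t' u Hred IH Hu
    |L t u u' Ht Hred IH]; intros v Hv; in_app.
  - rewrite jumps_fv in *. in_app. tauto.
  - destruct (fv_open_var _ _ _ _ Hv); auto. subst. apply occ_fv in Hocc. tauto.
  - apply fv_subst in Hv. destruct Hv as [[Hv Hne]|Hv]; auto.
    destruct (fv_open_var _ _ _ _ Hv); auto. congruence.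
  - unfold c_reduct, close in *; in_app; rewrite ?fv_close in *; in_app.
    rewrite ?fv_close in *.
    destruct Hv as [[[[Hv ?] ?]|[? ?]]|?]; try tauto.
    destruct (rename_fv _ _ _ _ Hr _ Hv); try congruence.
    destruct (fv_open_var _ _ _ _ H1); auto. congruence.
  - destruct (fresh_ex (v :: L)) as [z Hz]. simpl in Hz.
    assert (Hv' := fv_open_incl _ 0 (fvar z) _ Hv).
    apply IH in Hv'; [|tauto]. destruct (fv_open_var _ _ _ _ Hv'); auto. intuition congruence.
  - destruct Hv; auto.
  - destruct Hv; auto.
  - destruct Hv as [Hv|Hv]; auto.
    destruct (fresh_ex (v :: L)) as [z Hz]. simpl in Hz.
    assert (Hv' := fv_open_incl _ 0 (fvar z) _ Hv).
    apply IH in Hv'; [|tauto]. destruct (fv_open_var _ _ _ _ Hv'); auto. intuition congruence.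
  - destruct Hv; auto.
Qed.

Lemma c_reduct_rename_fresh t u a b s' a' b' : lc_at 1 t ->
  ~ In a (fv t ++ fv u) -> ~ In b (fv t ++ fv u) -> a <> b ->
  rename_some a b (open t (fvar a)) s' ->
  ~ In a' (fv t ++ fv u ++ fv s' ++ [a; b]) -> ~ In b' (fv t ++ fv u ++ fv s' ++ [a; b]) ->
  a' <> b' ->
  rename_some a' b' (open t (fvar a')) (subst a (fvar a') (subst b (fvar b') s')) /\
  occ b' (subst a (fvar a') (subst b (fvar b') s')) = occ b s' /\
  c_reduct a b s' u = c_reduct a' b' (subst a (fvar a') (subst b (fvar b') s')) u.
Proof.
  intros Hlc Ha Hb Hab Hr Ha' Hb' Hab'. in_app.
  split; [|split].
  - pose proof (rename_subst_var _ _ _ _ Hr b b') as H1.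
    destruct (Nat.eqb_spec b a); try congruence. rewrite Nat.eqb_refl in H1.
    rewrite (subst_fresh (open t (fvar a))) in H1.
    2:{ intro H; destruct (fv_open_var _ _ _ _ H); tauto. }
    pose proof (rename_subst_var _ _ _ _ H1 a a') as H2.
    rewrite Nat.eqb_refl in H2. destruct (Nat.eqb_spec a b'); try (exfalso; tauto).
    unfold open in *. rewrite subst_intro in H2; auto.
  - rewrite occ_subst_other; simpl; try (intro; subst; tauto); try tauto.
    rewrite occ_subst_var; try (intro; subst; tauto).
    assert (occ b' s' = 0) by (apply occ_fv; tauto). lia.
  - unfold c_reduct, close. f_equal.
    rewrite (close_rename _ 0 b b').
    2:{ simpl. rewrite in_app_iff, fv_close. tauto. }
    simpl. rewrite (subst_fresh u b); [|tauto].
    rewrite subst_close; [|congruence|simpl; intros [H|H]; [subst; tauto|tauto]].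
    rewrite (close_rename (subst b (fvar b') s') 0 a a'); auto.
    intro H. apply fv_subst in H. simpl in H. intuition (subst; tauto).
Qed.

Ltac fresh_tac := in_app; intuition (subst; tauto).

(* Any c-step can be performed with any pair of names fresh for [t] and [u]
   (going through a third pair fresh for everything). *)
Lemma c_reduct_rename t u x y s' : lc_at 1 t ->
  ~ In x (fv t ++ fv u) -> ~ In y (fv t ++ fv u) -> x <> y ->
  rename_some x y (open t (fvar x)) s' ->
  forall x1 y1, ~ In x1 (fv t ++ fv u) -> ~ In y1 (fv t ++ fv u) -> x1 <> y1 ->
  exists s1, rename_some x1 y1 (open t (fvar x1)) s1 /\ occ y1 s1 = occ y s' /\
    c_reduct x y s' u = c_reduct x1 y1 s1 u.
Proof.
  intros Hlc Hx Hy Hxy Hr x1 y1 Hx1 Hy1 Hxy1.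
  destruct (fresh_ex (fv t ++ fv u ++ fv s' ++ [x; y; x1; y1])) as [x2 Hx2].
  destruct (fresh_ex (x2 :: fv t ++ fv u ++ fv s' ++ [x; y; x1; y1])) as [y2 Hy2].
  destruct (c_reduct_rename_fresh t u x y s' x2 y2 Hlc Hx Hy Hxy Hr
    ltac:(fresh_tac) ltac:(fresh_tac) ltac:(fresh_tac)) as [H1 [H2 H3]].
  set (s2 := subst x (fvar x2) (subst y (fvar y2) s')) in *.
  assert (Hs2 : forall v, In v (fv s2) -> In v (fv t) \/ v = x2 \/ v = y2).
  { intros v Hv. destruct (rename_fv _ _ _ _ H1 _ Hv) as [H|H]; auto.
    destruct (fv_open_var _ _ _ _ H); auto. }
  assert (Nx1 : ~ In x1 (fv s2)) by (intro H; apply Hs2 in H; fresh_tac).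
  assert (Ny1 : ~ In y1 (fv s2)) by (intro H; apply Hs2 in H; fresh_tac).
  destruct (c_reduct_rename_fresh t u x2 y2 s2 x1 y1 Hlc ltac:(fresh_tac) ltac:(fresh_tac)
    ltac:(fresh_tac) H1 ltac:(fresh_tac) ltac:(fresh_tac) Hxy1) as [G1 [G2 G3]].
  exists (subst x2 (fvar x1) (subst y2 (fvar y1) s2)); repeat split; congruence.
Qed.

(* The c-case of [red_subst]: choose the names of the step fresh for [w] too. *)
Lemma red_c_subst t u x y s' z w : lc_at 0 w -> lc_at 0 (jsub t u) ->
  ~ In x (fv t ++ fv u) -> ~ In y (fv t ++ fv u) -> x <> y ->
  2 <= bocc 0 t -> rename_some x y (open t (fvar x)) s' ->
  1 <= occ y s' -> occ y s' <= bocc 0 t - 1 ->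
  red (subst z w (jsub t u)) (subst z w (c_reduct x y s' u)).
Proof.
  intros Hw Hlc Hx Hy Hxy Hocc Hr Hy1 Hy2. simpl in Hlc.
  destruct (fresh_ex (z :: fv t ++ fv u ++ fv w)) as [x1 Hx1].
  destruct (fresh_ex (x1 :: z :: fv t ++ fv u ++ fv w)) as [y1 Hy1'].
  simpl in Hx1, Hy1'; rewrite !in_app_iff in Hx1, Hy1'.
  destruct (c_reduct_rename t u x y s') with (x1 := x1) (y1 := y1) as [s1 [R1 [O1 E1]]];
    try tauto; try fresh_tac.
  rewrite E1. unfold c_reduct, close. cbn [subst].
  rewrite !subst_close; try fresh_tac. cbn [subst].
  rewrite !subst_close; try fresh_tac.
  apply red_c'; try fresh_tac.
  - simpl; split; apply subst_lc_at; tauto.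
  - intros H; in_app; destruct H as [H|H]; apply fv_subst in H; fresh_tac.
  - intros H; in_app; destruct H as [H|H]; apply fv_subst in H; fresh_tac.
  - rewrite bocc_subst; auto.
  - unfold open. rewrite <- subst_open_var; auto; try fresh_tac.
    apply rename_subst; auto; fresh_tac.
  - rewrite occ_subst_other; try lia; fresh_tac.
  - rewrite occ_subst_other, bocc_subst; try lia; fresh_tac.
Qed.

Lemma red_subst s s' : red s s' -> forall z w, lc_at 0 w -> red (subst z w s) (subst z w s').
Proof.
  induction 1 as [L t u Hlc|t u x Hlc Hx Hocc|t u x Hlc Hx Hocc
    |t u x y s' Hlc Hx Hy Hxy Hocc Hr Hy1 Hy2
    |L t t' Hred IH|t t' u Hred IH Hu|t u u' Ht Hred IH|L t t' u Hred IH Hu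
    |L t u u' Ht Hred IH]; intros z w Hw.
  - assert (H : lc_at 0 (subst z w (app (jumps L (abs t)) u))).
    { apply subst_lc_at; auto. apply lc_iff; auto. }
    simpl in *. rewrite !jumps_subst in *. simpl in *. apply red_dB. apply lc_iff; auto.
  - rewrite lc_iff in Hlc. simpl in Hlc. rewrite in_app_iff in Hx.
    rewrite occ_open_fresh in Hocc by tauto.
    unfold open; rewrite open_lc_at by (apply lc_at_bocc; tauto).
    apply red_w'; [simpl; split; apply subst_lc_at; tauto|rewrite bocc_subst; auto].
  - rewrite lc_iff in Hlc. simpl in Hlc. rewrite in_app_iff in Hx.
    rewrite occ_open_fresh in Hocc by tauto.
    unfold open; rewrite subst_intro by tauto.
    rewrite subst_open; auto. apply red_d'.
    + simpl; split; apply subst_lc_at; tauto.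
    + rewrite bocc_subst; auto.
  - rewrite lc_iff in Hlc.
    rewrite occ_open_fresh in Hocc, Hy2 by (in_app; tauto).
    fold (c_reduct x y s' u). apply red_c_subst; auto.
  - simpl. apply red_abs with (L := z :: L ++ fv w). intros y Hy. in_app.
    unfold open. rewrite <- !subst_open_var; auto; try (intro; subst; tauto).
    apply IH; auto.
  - simpl. apply red_app_l; auto. apply lc_iff, subst_lc_at; auto. apply lc_iff; auto.
  - simpl. apply red_app_r; auto. apply lc_iff, subst_lc_at; auto. apply lc_iff; auto.
  - simpl. apply red_jsub_l with (L := z :: L ++ fv w).
    + intros y Hy. in_app.
      unfold open. rewrite <- !subst_open_var; auto; try (intro; subst; tauto).
      apply IH; auto.
    + apply lc_iff, subst_lc_at; auto. apply lc_iff; auto.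
  - simpl. apply red_jsub_r with (L := z :: L ++ fv w); auto.
    intros y Hy. in_app.
    unfold open. rewrite <- !subst_open_var; auto; try (intro; subst; tauto).
    apply lc_iff, subst_lc_at; auto. apply lc_iff; apply Ht; auto.
Qed.

Notation star := (clos_refl_trans_1n term red).

Lemma star_trans a b c : star a b -> star b c -> star a c.
Proof.
  intros H1 H2. apply clos_rt_rt1n. eapply rt_trans; apply clos_rt1n_rt; eauto.
Qed.

Lemma red_abs_close A b z : ~ In z (fv A) -> red (open A (fvar z)) b ->
  red (abs A) (abs (close z b)).
Proof.
  intros Hz Hr. apply red_abs with (L := []). intros y _.
  unfold close, open. rewrite open_close by (eapply red_lc_r; eauto).
  rewrite <- (subst_intro A 0 z (fvar y)); auto. apply red_subst; simpl; auto.
Qed.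

Lemma red_jsub_close A b z u : ~ In z (fv A) -> red (open A (fvar z)) b -> lc_at 0 u ->
  red (jsub A u) (jsub (close z b) u).
Proof.
  intros Hz Hr Hu. apply red_jsub_l with (L := []).
  - intros y _. unfold close, open. rewrite open_close by (eapply red_lc_r; eauto).
    rewrite <- (subst_intro A 0 z (fvar y)); auto. apply red_subst; simpl; auto.
  - apply lc_iff; auto.
Qed.

Lemma star_abs_close P S : star P S -> forall A z, P = open A (fvar z) -> ~ In z (fv A) ->
  star (abs A) (abs (close z S)).
Proof.
  induction 1 as [P|P Q S Hr HS IH]; intros A z E Hz; subst.
  - unfold close, open; rewrite close_open; auto. constructor.
  - eapply Relation_Operators.rt1n_trans; [apply red_abs_close; eauto|].
    apply IH.
    + unfold open, close. rewrite open_close, subst_id; auto. eapply red_lc_r; eauto.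
    + unfold close; rewrite fv_close; tauto.
Qed.

Lemma star_abs A B z : ~ In z (fv A) -> ~ In z (fv B) ->
  star (open A (fvar z)) (open B (fvar z)) -> star (abs A) (abs B).
Proof.
  intros. replace B with (close z (open B (fvar z))) by (unfold close, open; apply close_open; auto).
  eapply star_abs_close; eauto.
Qed.

Lemma star_jsub_close u P S : lc_at 0 u -> star P S ->
  forall A z, P = open A (fvar z) -> ~ In z (fv A) ->
  star (jsub A u) (jsub (close z S) u).
Proof.
  intros Hu; induction 1 as [P|P Q S Hr HS IH]; intros A z E Hz; subst.
  - unfold close, open; rewrite close_open; auto. constructor.
  - eapply Relation_Operators.rt1n_trans; [apply red_jsub_close; eauto|].
    apply IH.
    + unfold open, close. rewrite open_close, subst_id; auto. eapply red_lc_r; eauto.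
    + unfold close; rewrite fv_close; tauto.
Qed.

Lemma star_jsub_l A B u z : ~ In z (fv A) -> ~ In z (fv B) -> lc_at 0 u ->
  star (open A (fvar z)) (open B (fvar z)) -> star (jsub A u) (jsub B u).
Proof.
  intros. replace B with (close z (open B (fvar z))) by (unfold close, open; apply close_open; auto).
  eapply star_jsub_close; eauto.
Qed.

Lemma star_app_l t t' u : star t t' -> lc_at 0 u -> star (app t u) (app t' u).
Proof.
  induction 1; intros; [constructor|].
  eapply Relation_Operators.rt1n_trans; eauto. apply red_app_l; auto. apply lc_iff; auto.
Qed.

Lemma star_app_r t u u' : star u u' -> lc_at 0 t -> star (app t u) (app t u').
Proof.
  induction 1; intros; [constructor|].
  eapply Relation_Operators.rt1n_trans; eauto. apply red_app_r; auto. apply lc_iff; auto.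
Qed.

Lemma star_jsub_r t u u' : star u u' -> lc_at 1 t -> star (jsub t u) (jsub t u').
Proof.
  induction 1; intros; [constructor|].
  eapply Relation_Operators.rt1n_trans; eauto. apply red_jsub_r with (L := []); auto.
  intros; apply lc_iff. apply open_lc_at_lower; simpl; auto.
Qed.

Lemma red_subst_r u u' : red u u' -> forall t, lc t -> forall x,
  star (subst x u t) (subst x u' t).
Proof.
  intros Hr. destruct (red_lc _ _ Hr) as [Hu Hu'].
  induction 1 as [y|L t Ht IH|t1 t2 H1 IH1 H2 IH2|L t1 t2 H1 IH1 H2 IH2]; intros x; simpl.
  - case_eqb; [apply clos_rt1n_step; auto|constructor].
  - destruct (fresh_ex (x :: L ++ fv t ++ fv u ++ fv u')) as [z Hz]. in_app.
    apply star_abs with (z := z); try (intro H; apply fv_subst in H; tauto).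
    unfold open. rewrite <- !subst_open_var; auto; try (intro; subst; tauto). apply IH; tauto.
  - eapply star_trans.
    + apply star_app_l; [apply IH1|]. apply subst_lc_at; auto; apply lc_iff; auto.
    + apply star_app_r; [apply IH2|]. apply subst_lc_at; auto; apply lc_iff; auto.
  - destruct (fresh_ex (x :: L ++ fv t1 ++ fv u ++ fv u')) as [z Hz]. in_app.
    apply star_trans with (b := jsub (subst x u' t1) (subst x u t2)).
    + apply star_jsub_l with (z := z); try (intro H; apply fv_subst in H; tauto).
      * apply subst_lc_at; auto; apply lc_iff; auto.
      * unfold open. rewrite <- !subst_open_var; auto; try (intro; subst; tauto). apply IH1; tauto.
    + apply star_jsub_r; [apply IH2|].
      apply subst_lc_at; auto. apply (lc_at_open_inv _ 0 (fvar z)). apply lc_iff. apply H1. tauto.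
Qed.

Lemma app_list_red vs : forall h h', red h h' -> Forall (lc_at 0) vs ->
  red (app_list h vs) (app_list h' vs).
Proof.
  induction vs; simpl; intros h h' Hr Hv; auto. inversion Hv; subst.
  apply IHvs; auto. apply red_app_l; auto. apply lc_iff; auto.
Qed.

Lemma app_list_star vs h h' : star h h' -> Forall (lc_at 0) vs ->
  star (app_list h vs) (app_list h' vs).
Proof. induction 1; intros; [constructor|]. eapply Relation_Operators.rt1n_trans; eauto. apply app_list_red; auto. Qed.

Lemma app_list_red_arg vs1 : forall h v v' vs2, lc_at 0 h -> Forall (lc_at 0) vs1 ->
  red v v' -> Forall (lc_at 0) vs2 ->
  red (app_list h (vs1 ++ v :: vs2)) (app_list h (vs1 ++ v' :: vs2)).
Proof.
  induction vs1; simpl; intros h v v' vs2 Hh H1 Hr H2.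
  - apply app_list_red; auto. apply red_app_r; auto. apply lc_iff; auto.
  - inversion H1; subst. apply IHvs1; simpl; auto.
Qed.

Lemma app_list_red_inv vs : forall h s', red (app_list h vs) s' ->
  (exists h', red h h' /\ s' = app_list h' vs) \/
  (exists vs1 v v' vs2, vs = vs1 ++ v :: vs2 /\ red v v' /\ s' = app_list h (vs1 ++ v' :: vs2)) \/
  (exists L b v1 rest, vs = v1 :: rest /\ h = jumps L (abs b) /\
     s' = app_list (jumps L (jsub b v1)) rest).
Proof.
  induction vs; simpl; intros h s' Hr.
  - left; eauto.
  - destruct (IHvs _ _ Hr) as [[h' [H1 ->]] | [[vs1 [v [v' [vs2 [-> [H2 ->]]]]]]
      | [L [b [v1 [rest [-> [E ->]]]]]]]].
    + inversion H1; subst.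
      * right; right. do 4 eexists; eauto.
      * left; eauto.
      * right; left. exists [], a, u', vs; simpl; auto.
    + right; left. exists (a :: vs1), v, v', vs2; simpl; auto.
    + exfalso; eapply jumps_abs_not_app; eauto.
Qed.

(* An environment [[(x1,u1);...;(xm,um)]] denotes both the jumps
   [t[x1/u1]...[xm/um]] ([mjump]) and the substitution [t{x1/u1}...{xm/um}] ([msubst]). *)
Notation env := (list (var * term)).

Definition env_fv (s : env) : list var := flat_map (fun p => fv (snd p)) s.
Definition fresh_in_env (s : env) (y : var) : Prop := forall x u, In (x, u) s -> ~ In y (fv u).
Definition names_fresh (s : env) (w : term) : Prop := forall x, In x (map fst s) -> ~ In x (fv w).
Definition env_lc (s : env) : Prop := forall x u, In (x, u) s -> lc_at 0 u.
Definition env_closed (s : env) : Prop :=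
  forall x u y w, In (x, u) s -> In (y, w) s -> ~ In x (fv w).

Lemma env_fv_in s x u y : In (x, u) s -> In y (fv u) -> In y (env_fv s).
Proof. intros. unfold env_fv. apply in_flat_map. exists (x, u); auto. Qed.

Lemma fresh_in_env_fv s y : ~ In y (env_fv s) -> fresh_in_env s y.
Proof. intros H x u Hi Hy. apply H. eapply env_fv_in; eauto. Qed.

Lemma in_fst (s : env) x u : In (x, u) s -> In x (map fst s).
Proof. intros. apply (in_map fst) in H; auto. Qed.

Lemma in_snd (s : env) x u : In (x, u) s -> In u (map snd s).
Proof. intros. apply (in_map snd) in H; auto. Qed.

Lemma env_snoc_inv s x u :
  NoDup (map fst (s ++ [(x, u)])) -> env_closed (s ++ [(x, u)]) -> env_lc (s ++ [(x, u)]) ->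
  NoDup (map fst s) /\ env_closed s /\ env_lc s /\ ~ In x (map fst s) /\
  fresh_in_env s x /\ names_fresh s u /\ ~ In x (fv u) /\ lc_at 0 u.
Proof.
  intros H1 H2 H3. rewrite map_app in H1. simpl in H1.
  assert (Hi : forall p, In p s -> In p (s ++ [(x, u)])) by (intros; rewrite in_app_iff; auto).
  assert (Hx : In (x, u) (s ++ [(x, u)])) by (rewrite in_app_iff; simpl; auto).
  repeat split.
  - apply NoDup_remove_1 in H1. rewrite app_nil_r in H1; auto.
  - intros a b c d Ha Hc. eapply H2; eauto.
  - intros a b Ha. eapply H3; eauto.
  - apply NoDup_remove_2 in H1. rewrite app_nil_r in H1; auto.
  - intros a b Ha. eapply H2; eauto.
  - intros a Ha. apply in_map_iff in Ha. destruct Ha as [[a' b'] [E Ha]]; simpl in E; subst.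
    eapply H2; eauto.
  - eapply H2; eauto.
  - eapply H3; eauto.
Qed.

Lemma mjump_app s1 : forall s2 t, mjump (s1 ++ s2) t = mjump s2 (mjump s1 t).
Proof. induction s1 as [|[x u] s1 IH]; simpl; auto. Qed.

Lemma msubst_app s1 : forall s2 t, msubst (s1 ++ s2) t = msubst s2 (msubst s1 t).
Proof. induction s1 as [|[x u] s1 IH]; simpl; auto. Qed.

Lemma mjump_snoc s x u t : mjump (s ++ [(x, u)]) t = jsub (close x (mjump s t)) u.
Proof. rewrite mjump_app; auto. Qed.

Lemma mjump_lc s : forall t, env_lc s -> lc_at 0 t -> lc_at 0 (mjump s t).
Proof.
  induction s as [|[x u] s IH]; simpl; intros t Hs Ht; auto.
  apply IH; [intros a b Hi; eapply Hs; simpl; eauto|].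
  simpl; split; [apply close_lc_at; auto|eapply Hs; simpl; eauto].
Qed.

Lemma msubst_lc s : forall t, env_lc s -> lc_at 0 t -> lc_at 0 (msubst s t).
Proof.
  induction s as [|[x u] s IH]; simpl; intros t Hs Ht; auto.
  apply IH; [intros a b Hi; eapply Hs; simpl; eauto|].
  apply subst_lc_at; auto. eapply Hs; simpl; eauto.
Qed.

Lemma mjump_fv s : forall t y, In y (fv (mjump s t)) -> In y (fv t) \/ In y (env_fv s).
Proof.
  induction s as [|[x u] s IH]; simpl; intros t y H; auto.
  unfold env_fv in *; simpl. rewrite in_app_iff.
  destruct (IH _ _ H) as [H1|H1]; [|tauto].
  simpl in H1; rewrite in_app_iff in H1. destruct H1 as [H1|H1]; [|tauto].
  unfold close in H1; rewrite fv_close in H1; tauto.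
Qed.

Lemma msubst_fv s : forall t y, In y (fv (msubst s t)) -> In y (fv t) \/ In y (env_fv s).
Proof.
  induction s as [|[x u] s IH]; simpl; intros t y H; auto.
  unfold env_fv in *; simpl; rewrite in_app_iff.
  destruct (IH _ _ H) as [H1|H1]; [|tauto]. apply fv_subst in H1. tauto.
Qed.

Lemma occ_mjump s : forall t y, ~ In y (map fst s) -> fresh_in_env s y ->
  occ y (mjump s t) = occ y t.
Proof.
  induction s as [|[x u] s IH]; simpl; intros t y H1 H2; auto.
  rewrite IH; [|tauto|intros a b Hi; eapply H2; simpl; eauto]. simpl.
  unfold close; rewrite occ_close by (intro; subst; tauto).
  assert (occ y u = 0) by (apply occ_fv; eapply H2; simpl; eauto). lia.
Qed.

Lemma subst_mjump s : forall t z w, ~ In z (map fst s) -> fresh_in_env s z -> names_fresh s w ->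
  subst z w (mjump s t) = mjump s (subst z w t).
Proof.
  induction s as [|[x u] s IH]; simpl; intros t z w H1 H2 H3; auto.
  rewrite IH; [|tauto|intros a b Hi; eapply H2; simpl; eauto|intros a Ha; apply H3; simpl; auto].
  f_equal. simpl. unfold close.
  rewrite subst_close; [|intro; subst; tauto|apply H3; simpl; auto].
  rewrite (subst_fresh u); auto. eapply H2; simpl; eauto.
Qed.

Lemma subst_msubst s : forall t z w, ~ In z (map fst s) -> fresh_in_env s z -> names_fresh s w ->
  subst z w (msubst s t) = msubst s (subst z w t).
Proof.
  induction s as [|[x u] s IH]; simpl; intros t z w H1 H2 H3; auto.
  rewrite IH; [|tauto|intros a b Hi; eapply H2; simpl; eauto|intros a Ha; apply H3; simpl; auto].
  f_equal. rewrite subst_subst; auto; [apply H3|eapply H2]; simpl; eauto.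
Qed.

Lemma msubst_fresh s : forall v, names_fresh s v -> msubst s v = v.
Proof.
  induction s as [|[x u] s IH]; simpl; intros v H; auto.
  rewrite subst_fresh by (apply H; simpl; auto). apply IH. intros a Ha; apply H; simpl; auto.
Qed.

Lemma msubst_abs s : forall b, msubst s (abs b) = abs (msubst s b).
Proof. induction s as [|[x u] s IH]; simpl; auto. Qed.

Lemma msubst_jsub s : forall a b, msubst s (jsub a b) = jsub (msubst s a) (msubst s b).
Proof. induction s as [|[x u] s IH]; simpl; auto. Qed.

Lemma msubst_jumps s : forall L X, msubst s (jumps L X) = jumps (map (msubst s) L) (msubst s X).
Proof.
  induction s as [|[x u] s IH]; simpl; intros. { rewrite map_id; auto. }
  rewrite jumps_subst, IH, map_map; auto.
Qed.

Lemma msubst_red s : forall t t', env_lc s -> red t t' -> red (msubst s t) (msubst s t').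
Proof.
  induction s as [|[x u] s IH]; simpl; intros t t' Hs Hr; auto.
  apply IH; [intros a b Hi; eapply Hs; simpl; eauto|].
  apply red_subst; auto. eapply Hs; simpl; eauto.
Qed.

Lemma msubst_star s t t' : env_lc s -> star t t' -> star (msubst s t) (msubst s t').
Proof.
  intros Hs; induction 1; [constructor|].
  eapply Relation_Operators.rt1n_trans; eauto. apply msubst_red; auto.
Qed.

Lemma rename_mjump_inv s : forall t x y r, rename_some x y (mjump s t) r ->
  ~ In x (map fst s) -> ~ In y (map fst s) -> fresh_in_env s x ->
  exists t', r = mjump s t' /\ rename_some x y t t'.
Proof.
  induction s as [|[z u] s IH]; simpl; intros t x y r H H1 H2 H3; eauto.
  destruct (IH _ _ _ _ H) as [T [-> HT]]; try tauto.
  { intros a b Hi; eapply H3; simpl; eauto. }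
  inversion HT; subst.
  - exists t; split; auto; apply rs_refl.
  - unfold close in *. destruct (rename_close_inv _ _ _ _ _ _ H5) as [t' [-> Ht']];
      try (intro; subst; tauto).
    rewrite (rename_fresh _ _ _ _ H7); [|eapply H3; simpl; eauto].
    exists t'; split; auto.
Qed.

Lemma w_close_inv x B z : lc_at 0 B -> ~ In z (fv (close x B)) ->
  occ z (open (close x B) (fvar z)) = 0 -> occ x B = 0 /\ open (close x B) (fvar z) = B.
Proof.
  intros HB Hz Ho. rewrite occ_open_fresh in Ho by auto.
  unfold close in *. rewrite bocc_close, (bocc_lc_at B 0 0) in Ho by auto.
  assert (E : close_rec 0 x B = B) by (apply close_fresh, occ_fv; lia).
  split; [lia|]. unfold open; rewrite E. apply open_lc_at; auto.
Qed.

Lemma d_close_inv x B z u : lc_at 0 B -> ~ In z (fv (close x B)) ->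
  occ z (open (close x B) (fvar z)) = 1 ->
  occ x B = 1 /\ subst z u (open (close x B) (fvar z)) = subst x u B.
Proof.
  intros HB Hz Ho. rewrite occ_open_fresh in Ho by auto.
  unfold close, open in *. rewrite bocc_close, (bocc_lc_at B 0 0) in Ho by auto.
  split; [lia|]. rewrite subst_intro by auto. apply open_close; auto.
Qed.

Lemma c_close_inv x B u z y0 s' y1 : lc_at 0 B ->
  ~ In z (fv (close x B) ++ fv u) -> ~ In y0 (fv (close x B) ++ fv u) -> z <> y0 ->
  rename_some z y0 (open (close x B) (fvar z)) s' ->
  ~ In y1 (fv B ++ fv u) -> y1 <> x -> ~ In x (fv u) ->
  occ z (open (close x B) (fvar z)) = occ x B /\
  exists s1, rename_some x y1 B s1 /\ occ y1 s1 = occ y0 s' /\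
    c_reduct z y0 s' u = mjump [(x, u); (y1, u)] s1.
Proof.
  intros HB Hz Hy0 Hzy Hrs Hy1 Hy1x Hxu.
  assert (HcB : lc_at 1 (close x B)) by (apply close_lc_at; auto).
  split.
  { rewrite occ_open_fresh by (in_app; tauto). unfold close.
    rewrite bocc_close, (bocc_lc_at B 0 0); auto. }
  destruct (c_reduct_rename (close x B) u z y0 s' HcB Hz Hy0 Hzy Hrs x y1)
    as [s1 [R1 [O1 E1]]]; try (unfold close; in_app; rewrite ?fv_close; tauto); [congruence|].
  unfold close, open in R1. rewrite open_close, subst_id in R1 by auto.
  exists s1; repeat split; auto.
Qed.

Lemma body_close_inv x B L t' : lc_at 0 B ->
  (forall z, ~ In z L -> red (open (close x B) (fvar z)) (open t' (fvar z))) ->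
  exists B', red B B' /\ t' = close x B'.
Proof.
  intros HB Hred.
  destruct (fresh_ex (L ++ fv B ++ fv t' ++ [x])) as [z Hz]. in_app.
  assert (Hr1 : red (subst x (fvar z) B) (open t' (fvar z))).
  { unfold close, open in Hred. rewrite <- (open_close B 0 x) by auto. apply Hred; tauto. }
  assert (Hxt : ~ In x (fv t')).
  { intro H. apply (fv_open_incl _ 0 (fvar z)) in H. apply (red_fv _ _ Hr1) in H.
    apply fv_subst in H. simpl in H. intuition. }
  assert (Hr2 := red_subst _ _ Hr1 z (fvar x) I).
  rewrite subst_var_back in Hr2 by tauto. unfold open in Hr2; rewrite subst_intro in Hr2 by tauto.
  exists (open_rec 0 (fvar x) t'); split; auto.
  unfold close; rewrite close_open; auto.
Qed.

Inductive mjump_step (s : env) (t : term) (A : list var) : term -> Prop :=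
| ms_body t' : red t t' -> mjump_step s t A (mjump s t')
| ms_arg s1 s2 x u u' : s = s1 ++ (x, u) :: s2 -> red u u' ->
    mjump_step s t A (mjump (s1 ++ (x, u') :: s2) t)
| ms_w s1 s2 x u : s = s1 ++ (x, u) :: s2 -> occ x t = 0 ->
    mjump_step s t A (mjump (s1 ++ s2) t)
| ms_d s1 s2 x u : s = s1 ++ (x, u) :: s2 -> occ x t = 1 ->
    mjump_step s t A (mjump (s1 ++ s2) (subst x u t))
| ms_c s1 s2 x u y t' : s = s1 ++ (x, u) :: s2 -> ~ In y A -> 2 <= occ x t ->
    rename_some x y t t' -> 1 <= occ y t' -> occ y t' <= occ x t - 1 ->
    mjump_step s t A (mjump (s1 ++ (x, u) :: (y, u) :: s2) t').

Lemma mjump_step_snoc s t A x u h : mjump_step s t A h ->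
  mjump_step (s ++ [(x, u)]) t A (jsub (close x h) u).
Proof.
  destruct 1 as [t' H|s1 s2 x' u1 u1' -> H|s1 s2 x' u1 -> H|s1 s2 x' u1 -> H
    |s1 s2 x' u1 y t' -> HA H2 H3 H4 H5]; rewrite <- mjump_snoc.
  - apply ms_body; auto.
  - rewrite <- !app_assoc; eapply ms_arg; eauto; reflexivity.
  - rewrite <- !app_assoc; eapply ms_w; eauto; reflexivity.
  - rewrite <- !app_assoc; eapply ms_d; eauto; reflexivity.
  - rewrite <- !app_assoc; eapply ms_c; eauto; reflexivity.
Qed.

(* The classification, by induction on the environment from the right: each
   step is either at the last jump or inside its body [mjump s t]. *)
Lemma mjump_red_inv s : forall t A h, NoDup (map fst s) -> env_closed s -> env_lc s ->
  lc_at 0 t -> red (mjump s t) h -> mjump_step s t A h.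
Proof.
  induction s as [|[x u] s IH] using rev_ind; intros t A h ND HJ HL Ht Hr.
  - apply (ms_body [] t A h Hr).
  - destruct (env_snoc_inv s x u ND HJ HL) as [ND' [HJ' [HL' [Hxs [Hux [Hxu [Hxu' Hu]]]]]]].
    rewrite mjump_snoc in Hr.
    assert (HB : lc_at 0 (mjump s t)) by (apply mjump_lc; auto).
    assert (Eo : occ x (mjump s t) = occ x t) by (apply occ_mjump; auto).
    apply red_jsub_inv in Hr.
    destruct Hr as [[z [Hz [Ho ->]]]|[[z [Hz [Ho ->]]]
      |[[z [y0 [s' [Hz [Hy0 [Hzy [Ho [Hrs [Hy1 [Hy2 ->]]]]]]]]]]
      |[[L [t'' [Hred ->]]]|[u' [Hred ->]]]]]]; try rewrite in_app_iff in Hz.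
    + destruct (w_close_inv x _ z HB) as [Hw ->]; try tauto.
      rewrite <- (app_nil_r s) at 2. apply ms_w with (x := x) (u := u); auto; lia.
    + destruct (d_close_inv x _ z u HB) as [Hd ->]; try tauto.
      rewrite subst_mjump by auto.
      rewrite <- (app_nil_r s) at 2. apply ms_d with (x := x) (u := u); auto; lia.
    + destruct (fresh_ex (A ++ fv (mjump s t) ++ fv u ++ [x] ++ map fst s ++ env_fv s))
        as [y1 Hy1']. in_app.
      destruct (c_close_inv x _ u z y0 s' y1 HB) as [Eo' [s1 [R1 [O1 E1]]]];
        try (in_app; tauto); [intro; subst; tauto|].
      rewrite Eo in Eo'. rewrite Eo' in Ho, Hy2. rewrite E1.
      rewrite !in_app_iff in Hy1'.
      destruct (rename_mjump_inv s t x y1 s1 R1) as [t' [-> Rt]]; try tauto.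
      rewrite <- mjump_app.
      rewrite occ_mjump in O1 by (try tauto; apply fresh_in_env_fv; tauto).
      apply ms_c with (u := u) (s1 := s) (s2 := []); auto; try tauto; lia.
    + destruct (body_close_inv x _ L t'' HB Hred) as [B' [HB' ->]].
      apply mjump_step_snoc. apply IH; auto.
    + rewrite <- mjump_snoc. apply ms_arg with (u := u); auto.
Qed.

Lemma close_jumps_inv L' : forall k x B b, close_rec k x B = jumps L' (abs b) ->
  exists L'' b'', B = jumps L'' (abs b'') /\
    forall v, ~ In x (fv v) -> close_rec k x (jumps L'' (jsub b'' v)) = jumps L' (jsub b v).
Proof.
  induction L' using rev_ind; simpl; intros k y B b H.
  - destruct B; simpl in H; try discriminate; [destruct (Nat.eqb y x); discriminate|].
    inversion H; subst. exists [], B; split; auto.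
    intros v Hv; simpl. f_equal. apply close_fresh; auto.
  - rewrite jumps_app in H; simpl in H.
    destruct B; simpl in H; try discriminate; [destruct (Nat.eqb y x0); discriminate|].
    inversion H; subst. destruct (IHL' _ _ _ _ H1) as [L'' [b'' [-> E]]].
    exists (L'' ++ [B2]), b''. rewrite !jumps_app; simpl. split; auto.
    intros v Hv. rewrite jumps_app; simpl. rewrite E; auto. rewrite jumps_app; auto.
Qed.

Lemma mjump_dB_inv s : forall t L b, mjump s t = jumps L (abs b) ->
  exists L0 b0, t = jumps L0 (abs b0) /\
   forall v, names_fresh s v -> jumps L (jsub b v) = mjump s (jumps L0 (jsub b0 v)).
Proof.
  induction s using rev_ind; simpl; intros t L b H.
  - exists L, b; split; auto.
  - destruct x as [x u]. rewrite mjump_snoc in H. symmetry in H.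
    destruct (jumps_snoc_inv _ _ _ _ H) as [L' [-> E]].
    symmetry in E. unfold close in E. destruct (close_jumps_inv _ _ _ _ _ E) as [L'' [b'' [E2 E3]]].
    destruct (IHs _ _ _ E2) as [L0 [b0 [-> E4]]].
    exists L0, b0; split; auto. intros v Hv.
    rewrite mjump_snoc, jumps_app; simpl. rewrite <- E4.
    + unfold close. rewrite E3; auto. apply Hv. rewrite map_app; simpl; rewrite in_app_iff; simpl; auto.
    + intros z Hz; apply Hv. rewrite map_app, in_app_iff; auto.
Qed.

Lemma msubst_mid s1 s2 x u t : ~ In x (map fst s1) -> fresh_in_env s1 x -> names_fresh s1 u ->
  msubst (s1 ++ (x, u) :: s2) t = msubst s2 (msubst s1 (subst x u t)).
Proof. intros. rewrite msubst_app; simpl. rewrite subst_msubst; auto. Qed.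

Lemma msubst_w s1 s2 x u t : ~ In x (map fst s1) -> fresh_in_env s1 x -> names_fresh s1 u ->
  occ x t = 0 -> msubst (s1 ++ s2) t = msubst (s1 ++ (x, u) :: s2) t.
Proof.
  intros. rewrite msubst_mid, msubst_app by auto. rewrite subst_fresh; auto. apply occ_fv; auto.
Qed.

Lemma msubst_d s1 s2 x u t : ~ In x (map fst s1) -> fresh_in_env s1 x -> names_fresh s1 u ->
  msubst (s1 ++ s2) (subst x u t) = msubst (s1 ++ (x, u) :: s2) t.
Proof. intros. rewrite msubst_mid, msubst_app; auto. Qed.

Lemma msubst_c s1 s2 x y u t t' : ~ In x (map fst s1) -> fresh_in_env s1 x -> names_fresh s1 u ->
  ~ In y (map fst s1) -> fresh_in_env s1 y -> ~ In y (fv t) -> ~ In y (fv u) ->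
  rename_some x y t t' ->
  msubst (s1 ++ (x, u) :: (y, u) :: s2) t' = msubst (s1 ++ (x, u) :: s2) t.
Proof.
  intros. rewrite msubst_mid by auto. rewrite msubst_app; simpl.
  rewrite subst_msubst, (rename_subst_back _ _ _ _ H6), subst_msubst; auto.
Qed.

Lemma msubst_arg s1 s2 x u u' t : env_lc s1 -> env_lc s2 -> lc_at 0 t -> red u u' ->
  star (msubst (s1 ++ (x, u) :: s2) t) (msubst (s1 ++ (x, u') :: s2) t).
Proof.
  intros. rewrite !msubst_app; simpl. apply msubst_star; auto.
  apply red_subst_r; auto. apply lc_iff, msubst_lc; auto.
Qed.

Section MultisetExtension.
Variable T : Type.
Variable R : T -> T -> Prop.

Definition mult (l' l : list T) : Prop :=
  exists A B a X, l = A ++ a :: B /\ l' = A ++ X ++ B /\ Forall (fun x => R x a) X.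

Lemma mult_cons_inv N a M : mult N (a :: M) ->
  (exists X, N = X ++ M /\ Forall (fun x => R x a) X) \/ (exists M', N = a :: M' /\ mult M' M).
Proof.
  intros [A [B [b [X [E1 [E2 HX]]]]]]. destruct A as [|c A]; simpl in *.
  - inversion E1; subst. left; eauto.
  - inversion E1; subst. right. exists (A ++ X ++ B); split; auto. exists A, B, b, X; auto.
Qed.

Lemma mult_acc_cons a : Acc R a -> forall M, Acc mult M -> Acc mult (a :: M).
Proof.
  induction 1 as [a _ IHa]. intros M HM. induction HM as [M HM IHM].
  constructor. intros N HN. destruct (mult_cons_inv _ _ _ HN) as [[X [-> HX]]|[M' [-> HM']]].
  - clear HN. induction X as [|x X IHX]; simpl; [constructor; auto|].
    inversion HX; subst. apply IHa; auto.
  - apply IHM; auto.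
Qed.

Lemma mult_acc l : Forall (Acc R) l -> Acc mult l.
Proof.
  induction 1.
  - constructor. intros N [A [B [b [X [E _]]]]]. destruct A; discriminate.
  - apply mult_acc_cons; auto.
Qed.
End MultisetExtension.

Notation red_plus := (clos_trans term (transp term red)).

Definition arg_order (p q : term * nat) : Prop :=
  red_plus (fst p) (fst q) \/ (fst p = fst q /\ snd p < snd q).

Lemma arg_order_acc u : SN u -> forall n, Acc arg_order (u, n).
Proof.
  intros Hu. apply Acc_clos_trans in Hu. induction Hu as [u _ IHu].
  intros n. induction n as [n IHn] using (well_founded_induction lt_wf).
  constructor. intros [u' n'] [H|[H1 H2]]; simpl in *; [apply IHu; auto|subst; apply IHn; auto].
Qed.

Lemma star_plus a b : star a b -> a = b \/ red_plus b a.
Proof.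
  induction 1; auto. right. destruct IHclos_refl_trans_1n as [->|H1].
  - apply t_step; auto.
  - eapply t_trans; eauto. apply t_step; auto.
Qed.

Lemma SN_red u u' : SN u -> red u u' -> SN u'.
Proof. intros H Hr. destruct H. apply H; auto. Qed.

Record config : Type := Config { cenv : env; cbody : term; cargs : list term }.

Definition jumps_term (c : config) : term := app_list (mjump (cenv c) (cbody c)) (cargs c).
Definition subst_term (c : config) : term := app_list (msubst (cenv c) (cbody c)) (cargs c).

Definition weight (c : config) : list (term * nat) :=
  map (fun p => (snd p, occ (fst p) (cbody c))) (cenv c).

Record config_ok (c : config) : Prop := ConfigOk {
  ok_nodup : NoDup (map fst (cenv c));
  ok_env_closed : forall a d, In a (map fst (cenv c)) -> In d (map snd (cenv c)) -> ~ In a (fv d);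
  ok_env_sn : forall d, In d (map snd (cenv c)) -> lc_at 0 d /\ SN d;
  ok_args_fresh : forall a v, In a (map fst (cenv c)) -> In v (cargs c) -> ~ In a (fv v);
  ok_body : lc_at 0 (cbody c);
  ok_args : Forall (lc_at 0) (cargs c) }.

Definition config_lt (c' c : config) : Prop :=
  (forall d, In d (map snd (cenv c')) -> SN d) /\
  (red_plus (subst_term c') (subst_term c) \/
   (subst_term c' = subst_term c /\ mult _ arg_order (weight c') (weight c))).

Lemma weight_acc c : (forall d, In d (map snd (cenv c)) -> SN d) -> Acc (mult _ arg_order) (weight c).
Proof.
  intros H. apply mult_acc, Forall_forall. intros [u n] Hi. unfold weight in Hi.
  apply in_map_iff in Hi. destruct Hi as [[x u'] [E Hi]]. inversion E; subst.
  apply arg_order_acc, H. eapply in_snd; eauto.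
Qed.

Lemma config_lt_acc c : SN (subst_term c) -> (forall d, In d (map snd (cenv c)) -> SN d) ->
  Acc config_lt c.
Proof.
  intros Hp. apply Acc_clos_trans in Hp. remember (subst_term c) as p eqn:Ep.
  revert c Ep. induction Hp as [p _ IHp]. intros c Ep Hargs.
  pose proof (weight_acc c Hargs) as HM. remember (weight c) as M eqn:EM.
  revert c Ep EM Hargs. induction HM as [M _ IHM]. intros c Ep EM Hargs.
  constructor. intros c' [Hargs' [Hlt|[Heq Hm]]].
  - apply (IHp (subst_term c')); subst; auto.
  - apply (IHM (weight c')); subst; auto; congruence.
Qed.

Definition descends (c' c : config) : Prop := config_ok c' /\ config_lt c' c.

Lemma config_ok_env_sn c : config_ok c -> forall d, In d (map snd (cenv c)) -> SN d.
Proof. intros G d Hd. apply (ok_env_sn _ G d Hd). Qed.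

Lemma weight_app s1 s2 t vs :
  weight (Config (s1 ++ s2) t vs) = weight (Config s1 t vs) ++ weight (Config s2 t vs).
Proof. apply map_app. Qed.

Lemma weight_ext s t t' vs vs' : (forall x, In x (map fst s) -> occ x t' = occ x t) ->
  weight (Config s t' vs') = weight (Config s t vs).
Proof.
  intros H. unfold weight. apply map_ext_in. intros [x u] Hi. simpl. f_equal.
  apply H. eapply in_fst; eauto.
Qed.

Lemma in_snd_mid (s1 s2 : env) x u d :
  In d (map snd (s1 ++ (x, u) :: s2)) <-> In d (map snd s1) \/ d = u \/ In d (map snd s2).
Proof. rewrite map_app, in_app_iff; simpl. intuition. Qed.

Lemma in_fst_mid (s1 s2 : env) x u a :
  In a (map fst (s1 ++ (x, u) :: s2)) <-> In a (map fst s1) \/ a = x \/ In a (map fst s2).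
Proof. rewrite map_app, in_app_iff; simpl. intuition. Qed.

Lemma in_snd_app (s1 s2 : env) d : In d (map snd (s1 ++ s2)) <-> In d (map snd s1) \/ In d (map snd s2).
Proof. rewrite map_app, in_app_iff. tauto. Qed.

Lemma in_fst_app (s1 s2 : env) d : In d (map fst (s1 ++ s2)) <-> In d (map fst s1) \/ In d (map fst s2).
Proof. rewrite map_app, in_app_iff. tauto. Qed.

Lemma NoDup_app_iff (l1 l2 : list var) :
  NoDup (l1 ++ l2) <-> NoDup l1 /\ NoDup l2 /\ (forall a, In a l1 -> ~ In a l2).
Proof.
  induction l1; simpl.
  - split; [intros; repeat split; auto; constructor|tauto].
  - rewrite !NoDup_cons_iff, IHl1, in_app_iff. firstorder. subst; auto.
Qed.

Lemma config_ok_mid s1 s2 x u t vs : config_ok (Config (s1 ++ (x, u) :: s2) t vs) ->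
  ~ In x (map fst s1) /\ ~ In x (map fst s2) /\ fresh_in_env s1 x /\ names_fresh s1 u /\
  env_lc s1 /\ env_lc s2 /\ lc_at 0 u /\ ~ In x (fv u) /\ SN u.
Proof.
  intros [ND HF HL _ _ _]. simpl in *. rewrite !map_app in *. simpl in *.
  apply NoDup_remove_2 in ND. rewrite in_app_iff in ND.
  assert (Hx : In x (map fst s1 ++ x :: map fst s2)) by (apply in_app_iff; simpl; auto).
  assert (Hu : In u (map snd s1 ++ u :: map snd s2)) by (apply in_app_iff; simpl; auto).
  split; [intro; apply ND; auto|].
  split; [intro; apply ND; auto|].
  split; [intros a b Hi; apply HF; auto; apply in_snd in Hi; apply in_app_iff; auto|].
  split; [intros a Ha; apply HF; auto; apply in_app_iff; auto|].
  split; [intros a b Hi; apply HL; apply in_snd in Hi; apply in_app_iff; auto|].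
  split; [intros a b Hi; apply HL; apply in_snd in Hi; apply in_app_iff; simpl; auto|].
  split; [apply HL; auto|].
  split; [apply HF; auto|].
  apply HL; auto.
Qed.

Lemma config_ok_arg s1 s2 x u u' t vs : config_ok (Config (s1 ++ (x, u) :: s2) t vs) ->
  red u u' -> config_ok (Config (s1 ++ (x, u') :: s2) t vs).
Proof.
  intros [ND HF HL HV Ht Hvs] Hr; simpl in *.
  assert (E : map fst (s1 ++ (x, u') :: s2) = map fst (s1 ++ (x, u) :: s2))
    by (rewrite !map_app; reflexivity).
  constructor; simpl; try rewrite E; auto.
  - intros a d Ha Hd. apply in_snd_mid in Hd. destruct Hd as [Hd|[->|Hd]].
    + apply HF; auto. apply in_snd_mid; auto.
    + intro Hf. apply (red_fv _ _ Hr) in Hf. revert Hf. apply HF; auto. apply in_snd_mid; auto.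
    + apply HF; auto. apply in_snd_mid; auto.
  - intros d Hd. apply in_snd_mid in Hd. destruct Hd as [Hd|[->|Hd]].
    + apply HL. apply in_snd_mid; auto.
    + split; [eapply red_lc_r; eauto|]. eapply SN_red; eauto. apply HL. apply in_snd_mid; auto.
    + apply HL. apply in_snd_mid; auto.
Qed.

Lemma config_ok_remove s1 s2 x u t t' vs : config_ok (Config (s1 ++ (x, u) :: s2) t vs) ->
  lc_at 0 t' -> config_ok (Config (s1 ++ s2) t' vs).
Proof.
  intros [ND HF HL HV Ht Hvs] Ht'; simpl in *.
  constructor; simpl; auto.
  - rewrite map_app in *. simpl in ND. apply NoDup_remove_1 in ND; auto.
  - intros a d Ha Hd. apply in_fst_app in Ha. apply in_snd_app in Hd. apply HF.
    + apply in_fst_mid; tauto.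
    + apply in_snd_mid; tauto.
  - intros d Hd. apply in_snd_app in Hd. apply HL. apply in_snd_mid; tauto.
  - intros a v Ha Hv. apply in_fst_app in Ha. apply HV; auto. apply in_fst_mid; tauto.
Qed.

Lemma config_ok_dup s1 s2 x u y t t' vs : config_ok (Config (s1 ++ (x, u) :: s2) t vs) ->
  ~ In y (map fst (s1 ++ (x, u) :: s2)) ->
  (forall d, In d (map snd (s1 ++ (x, u) :: s2)) -> ~ In y (fv d)) ->
  (forall v, In v vs -> ~ In y (fv v)) -> lc_at 0 t' ->
  config_ok (Config (s1 ++ (x, u) :: (y, u) :: s2) t' vs).
Proof.
  intros [ND HF HL HV Ht Hvs] Hy1 Hy2 Hy3 Ht'; simpl in *.
  assert (Ey : forall a, In a (map fst (s1 ++ (x, u) :: (y, u) :: s2)) <->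
                 a = y \/ In a (map fst (s1 ++ (x, u) :: s2))).
  { intros a. rewrite !map_app, !in_app_iff; simpl. intuition. }
  assert (Ed : forall d, In d (map snd (s1 ++ (x, u) :: (y, u) :: s2)) <->
                 In d (map snd (s1 ++ (x, u) :: s2))).
  { intros d. rewrite !map_app, !in_app_iff; simpl. intuition. }
  constructor; simpl; auto.
  - rewrite map_app in *. simpl in *. apply NoDup_app_iff in ND. destruct ND as [N1 [N2 N3]].
    rewrite in_app_iff in Hy1. simpl in Hy1.
    apply NoDup_app_iff. split; [|split]; auto.
    + inversion N2 as [|a l Hxl N2']; subst.
      constructor; [simpl; intros [E|E]; [subst; tauto|tauto]|].
      constructor; [tauto|auto].
    + intros a Ha Hb. simpl in Hb.
      destruct Hb as [E|[E|Hb]]; [apply (N3 a Ha); simpl; auto|subst; tauto|apply (N3 a Ha); simpl; auto].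
  - intros a d Ha Hd. apply Ey in Ha. apply Ed in Hd. destruct Ha as [->|Ha]; auto.
  - intros d Hd. apply HL. apply Ed; auto.
  - intros a v Ha Hv. apply Ey in Ha. destruct Ha as [->|Ha]; auto.
Qed.

Lemma descend_body s t t' vs : config_ok (Config s t vs) -> red t t' ->
  descends (Config s t' vs) (Config s t vs).
Proof.
  intros G Hr. destruct G as [ND HF HL HV Ht Hvs]; simpl in *.
  split; [constructor; simpl; auto; eapply red_lc_r; eauto|].
  split; [intros d Hd; apply HL; auto|left].
  apply t_step. apply app_list_red; auto. apply msubst_red; auto.
  intros x u Hi. apply HL. eapply in_snd; eauto.
Qed.

Lemma descend_env_arg s1 s2 x u u' t vs : config_ok (Config (s1 ++ (x, u) :: s2) t vs) ->
  red u u' -> descends (Config (s1 ++ (x, u') :: s2) t vs) (Config (s1 ++ (x, u) :: s2) t vs).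
Proof.
  intros G Hr.
  destruct (config_ok_mid _ _ _ _ _ _ G) as [_ [_ [_ [_ [L1 [L2 _]]]]]].
  assert (G2 := config_ok_arg _ _ _ _ _ _ _ G Hr).
  split; [exact G2|]. split; [apply config_ok_env_sn; auto|].
  destruct (star_plus _ _ (app_list_star _ _ _
    (msubst_arg s1 s2 x u u' t L1 L2 (ok_body _ G) Hr) (ok_args _ G))) as [E|E]; [right|left; exact E].
  split; [symmetry; exact E|].
  exists (weight (Config s1 t vs)), (weight (Config s2 t vs)), (u, occ x t), [(u', occ x t)].
  rewrite !weight_app. repeat split; auto. constructor; [|constructor].
  left. simpl. apply t_step. exact Hr.
Qed.

Lemma descend_w s1 s2 x u t vs : config_ok (Config (s1 ++ (x, u) :: s2) t vs) ->
  occ x t = 0 -> descends (Config (s1 ++ s2) t vs) (Config (s1 ++ (x, u) :: s2) t vs).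
Proof.
  intros G Ho.
  destruct (config_ok_mid _ _ _ _ _ _ G) as [F1 [_ [F3 [F4 _]]]].
  assert (G2 : config_ok (Config (s1 ++ s2) t vs)) by (eapply config_ok_remove; [eauto|exact (ok_body _ G)]).
  split; [exact G2|]. split; [apply config_ok_env_sn; auto|right].
  split; [unfold subst_term; simpl; rewrite (msubst_w s1 s2 x u t); auto|].
  exists (weight (Config s1 t vs)), (weight (Config s2 t vs)), (u, occ x t), [].
  rewrite !weight_app. auto.
Qed.

Lemma descend_d s1 s2 x u t vs : config_ok (Config (s1 ++ (x, u) :: s2) t vs) ->
  descends (Config (s1 ++ s2) (subst x u t) vs) (Config (s1 ++ (x, u) :: s2) t vs).
Proof.
  intros G.
  destruct (config_ok_mid _ _ _ _ _ _ G) as [F1 [F2 [F3 [F4 [_ [_ [F7 _]]]]]]].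
  assert (G2 : config_ok (Config (s1 ++ s2) (subst x u t) vs)).
  { eapply config_ok_remove; eauto. apply subst_lc_at; auto. exact (ok_body _ G). }
  split; [exact G2|]. split; [apply config_ok_env_sn; auto|right].
  split; [unfold subst_term; simpl; rewrite msubst_d; auto|].
  exists (weight (Config s1 t vs)), (weight (Config s2 t vs)), (u, occ x t), [].
  rewrite !weight_app. split; auto. split; auto.
  assert (Hocc : forall z, In z (map fst s1) \/ In z (map fst s2) -> occ z (subst x u t) = occ z t).
  { intros z Hz. apply occ_subst_other; [intro; subst; tauto|].
    apply (ok_env_closed _ G); simpl; [apply in_fst_mid; tauto|apply in_snd_mid; auto]. }
  simpl; f_equal; apply weight_ext; auto.
Qed.

Lemma descend_c s1 s2 x u y t t' vs : config_ok (Config (s1 ++ (x, u) :: s2) t vs) ->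
  ~ In y (fv t ++ env_fv (s1 ++ (x, u) :: s2) ++ map fst (s1 ++ (x, u) :: s2) ++ flat_map fv vs) ->
  2 <= occ x t -> rename_some x y t t' -> 1 <= occ y t' -> occ y t' <= occ x t - 1 ->
  descends (Config (s1 ++ (x, u) :: (y, u) :: s2) t' vs) (Config (s1 ++ (x, u) :: s2) t vs).
Proof.
  intros G Hy Ho Hr Hy1 Hy2. rewrite !in_app_iff in Hy.
  destruct (config_ok_mid _ _ _ _ _ _ G) as [F1 [F2 [F3 [F4 _]]]].
  assert (Hyd : forall a d, In (a, d) (s1 ++ (x, u) :: s2) -> ~ In y (fv d))
    by (intros a d Hi H; apply Hy; right; left; eapply env_fv_in; eauto).
  assert (Hyv : forall v, In v vs -> ~ In y (fv v))
    by (intros v Hi H; apply Hy; do 3 right; apply in_flat_map; eauto).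
  assert (Hyu : ~ In y (fv u)) by (apply (Hyd x); rewrite in_app_iff; simpl; auto).
  assert (Hxy : x <> y) by (intro; subst; rewrite in_fst_mid in Hy; tauto).
  assert (Hocc : occ x t' + occ y t' = occ x t).
  { rewrite (rename_occ_sum _ _ _ _ Hr Hxy). assert (occ y t = 0) by (apply occ_fv; tauto). lia. }
  assert (G2 : config_ok (Config (s1 ++ (x, u) :: (y, u) :: s2) t' vs)).
  { eapply config_ok_dup; eauto.
    - tauto.
    - intros d Hd. apply in_map_iff in Hd. destruct Hd as [[a d'] [Ed Hd]]; simpl in Ed; subst. eauto.
    - eapply rename_lc_at; eauto. exact (ok_body _ G). }
  split; [exact G2|]. split; [apply config_ok_env_sn; auto|right].
  split.
  - unfold subst_term; simpl. rewrite (msubst_c s1 s2 x y u t t'); auto.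
    + rewrite in_fst_mid in Hy. tauto.
    + intros a d Hi. apply (Hyd a d). rewrite in_app_iff; auto.
  - exists (weight (Config s1 t vs)), (weight (Config s2 t vs)), (u, occ x t),
      [(u, occ x t'); (u, occ y t')].
    rewrite !weight_app. split; auto. split.
    + simpl. assert (Hz : forall z, In z (map fst s1) \/ In z (map fst s2) -> occ z t' = occ z t).
      { intros z Hz. apply (rename_occ_other _ _ _ _ Hr); intro; subst; rewrite ?in_fst_mid in Hy;
          tauto. }
      unfold weight; simpl.
      f_equal; [|do 2 f_equal]; apply map_ext_in; intros [z d] Hi; simpl; f_equal;
        apply Hz; [left|right]; eapply in_fst; eauto.
    + constructor; [|constructor; [|constructor]]; right; simpl; split; auto; lia.
Qed.

Lemma descend_app_arg s t vs1 v v' vs2 : config_ok (Config s t (vs1 ++ v :: vs2)) -> red v v' ->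
  descends (Config s t (vs1 ++ v' :: vs2)) (Config s t (vs1 ++ v :: vs2)).
Proof.
  intros G Hv. destruct G as [ND HF HL HV Ht Hvs]; simpl in *.
  apply Forall_app in Hvs. destruct Hvs as [Hv1 Hv2]. inversion Hv2; subst.
  split; [constructor; simpl; auto|split; [intros d Hd; apply HL; auto|left]].
  - intros a w Ha Hw. apply in_app_iff in Hw. destruct Hw as [Hw|[<-|Hw]].
    + apply HV; auto; rewrite in_app_iff; auto.
    + intro Hf. apply (red_fv _ _ Hv) in Hf. revert Hf. apply HV; auto.
      rewrite in_app_iff; simpl; auto.
    + apply HV; auto; rewrite in_app_iff; simpl; auto.
  - apply Forall_app; split; auto. constructor; auto. eapply red_lc_r; eauto.
  - apply t_step. apply app_list_red_arg; auto. apply msubst_lc; auto.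
    intros x u Hi. apply HL. eapply in_snd; eauto.
Qed.

Lemma descend_dB s L0 b0 v1 rest : config_ok (Config s (jumps L0 (abs b0)) (v1 :: rest)) ->
  descends (Config s (jumps L0 (jsub b0 v1)) rest) (Config s (jumps L0 (abs b0)) (v1 :: rest)).
Proof.
  intros G. destruct G as [ND HF HL HV Ht Hvs]; simpl in *. inversion Hvs; subst.
  assert (Hs : env_lc s) by (intros x u Hi; apply HL; eapply in_snd; eauto).
  assert (Hx1 : names_fresh s v1) by (intros a Ha; apply HV; simpl; auto).
  split; [constructor; simpl; auto|split; [intros d Hd; apply HL; auto|left]].
  - apply (jumps_lc (abs b0)); auto. intros k Hk; simpl in *; split; auto. apply lc_at_0; auto.
  - apply t_step. unfold subst_term; simpl. apply app_list_red; auto.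
    rewrite !msubst_jumps, msubst_abs, msubst_jsub, (msubst_fresh s v1); auto.
    apply red_dB. apply lc_iff. simpl. split; auto.
    rewrite <- msubst_abs, <- msubst_jumps. apply msubst_lc; auto.
Qed.

Lemma jumps_term_step c h : config_ok c -> red (jumps_term c) h ->
  exists c', descends c' c /\ h = jumps_term c'.
Proof.
  intros G Hr. destruct c as [s t vs].
  assert (HU : env_lc s) by (intros x u Hi; apply (ok_env_sn _ G); eapply in_snd; eauto).
  assert (HJ : env_closed s).
  { intros x u y w H1 H2. apply (ok_env_closed _ G); [eapply in_fst|eapply in_snd]; eauto. }
  unfold jumps_term in Hr; simpl in Hr.
  destruct (app_list_red_inv _ _ _ Hr) as [[h' [Hh ->]] | [[vs1 [v [v' [vs2 [-> [Hv ->]]]]]]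
    | [L [b [v1 [rest [-> [Eh ->]]]]]]]].
  - destruct (mjump_red_inv s t (fv t ++ env_fv s ++ map fst s ++ flat_map fv vs) h'
      (ok_nodup _ G) HJ HU (ok_body _ G) Hh)
      as [t' H|s1 s2 x u u' -> H|s1 s2 x u -> H|s1 s2 x u -> H|s1 s2 x u y t' -> HA H2 H3 H4 H5].
    + eexists; split; [apply descend_body; eauto|reflexivity].
    + eexists; split; [apply descend_env_arg; eauto|reflexivity].
    + eexists; split; [apply descend_w; eauto|reflexivity].
    + eexists; split; [apply descend_d; eauto|reflexivity].
    + eexists; split; [apply descend_c; eauto|reflexivity].
  - eexists; split; [apply descend_app_arg; eauto|reflexivity].
  - destruct (mjump_dB_inv _ _ _ _ Eh) as [L0 [b0 [-> E]]].
    eexists; split; [apply descend_dB; eauto|].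
    unfold jumps_term; simpl. rewrite E; auto.
    intros a Ha. apply (ok_args_fresh _ G); simpl; auto.
Qed.

Lemma config_sn c : Acc config_lt c -> config_ok c -> SN (jumps_term c).
Proof.
  induction 1 as [c _ IH]. intros G. constructor. intros h Hr.
  destruct (jumps_term_step c h G Hr) as [c' [[G' Hlt] ->]]. apply IH; auto.
Qed.

Lemma in_snd_same (s s0 : env) a d : map snd s = map snd s0 -> In (a, d) s ->
  exists a', In (a', d) s0.
Proof.
  intros E Hi. apply in_snd in Hi. rewrite E in Hi. apply in_map_iff in Hi.
  destruct Hi as [[a' d'] [Ed Hi]]; simpl in Ed; subst; eauto.
Qed.

Lemma rename_env_apart s : forall t A, NoDup (map fst s) -> env_closed s -> env_lc s -> lc_at 0 t ->
  exists s' t', map snd s' = map snd s /\ NoDup (map fst s') /\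
    (forall x, In x (map fst s') -> ~ In x A) /\ lc_at 0 t' /\
    mjump s' t' = mjump s t /\ msubst s' t' = msubst s t.
Proof.
  induction s as [|[x u] s IH] using rev_ind; intros t A ND HJ HL Ht.
  - exists [], t; simpl; repeat split; auto; constructor.
  - destruct (env_snoc_inv s x u ND HJ HL) as [ND' [HJ' [HL' [Hxs [Hux [Hxu [Hxu' Hu]]]]]]].
    destruct (IH t (x :: A) ND' HJ' HL' Ht) as [s' [t' [E1 [N1 [N2 [N3 [N4 N5]]]]]]].
    destruct (fresh_ex (A ++ map fst s' ++ fv t' ++ env_fv s' ++ fv u ++ [x])) as [x' Hx'].
    rewrite !in_app_iff in Hx'; simpl in Hx'.
    assert (Hxs' : ~ In x (map fst s')) by (intro H; apply N2 in H; simpl in H; tauto).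
    assert (Hux' : fresh_in_env s' x).
    { intros a d Hi. destruct (in_snd_same _ _ _ _ E1 Hi) as [a' Hi']. eapply Hux; eauto. }
    assert (Hxf : names_fresh s' (fvar x')) by (intros a Ha; simpl; intros [->|[]]; tauto).
    exists (s' ++ [(x', u)]), (subst x (fvar x') t'). repeat split.
    + rewrite !map_app, E1; auto.
    + rewrite map_app. apply NoDup_app_iff. split; [auto|split; [simpl; repeat constructor; simpl; tauto|]].
      simpl. intros a Ha [E|[]]; subst; tauto.
    + intros a Ha. rewrite map_app in Ha; simpl in Ha; rewrite in_app_iff in Ha.
      destruct Ha as [Ha|[<-|[]]]; [apply N2 in Ha; simpl in Ha; tauto|tauto].
    + apply subst_lc_at; simpl; auto.
    + rewrite !mjump_snoc. rewrite <- subst_mjump, <- N4 by auto. f_equal. unfold close.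
      symmetry; apply close_rename. intro H. apply mjump_fv in H. tauto.
    + rewrite !msubst_app; simpl. rewrite <- subst_msubst by auto.
      rewrite subst_rename_var, N5; auto. intro H. apply msubst_fv in H. tauto.
Qed.

Lemma map_fst_combine (xs : list var) : forall (us : list term),
  length xs = length us -> map fst (combine xs us) = xs.
Proof. induction xs; destruct us; simpl; intros; try discriminate; auto. f_equal; auto. Qed.

Lemma map_snd_combine (xs : list var) : forall (us : list term),
  length xs = length us -> map snd (combine xs us) = us.
Proof. induction xs; destruct us; simpl; intros; try discriminate; auto. f_equal; auto. Qed.

Lemma config_apart_ok s s' t' vs :
  map snd s' = map snd s -> NoDup (map fst s') ->
  (forall x, In x (map fst s') -> ~ In x (flat_map fv vs ++ env_fv s)) ->
  (forall d, In d (map snd s) -> lc_at 0 d /\ SN d) ->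
  lc_at 0 t' -> Forall (lc_at 0) vs -> config_ok (Config s' t' vs).
Proof.
  intros F1 F2 F3 Hargs Ht Hvs. constructor; simpl; auto.
  - intros a d Ha Hd. rewrite F1 in Hd. apply F3 in Ha. intro Hf. apply Ha, in_app_iff; right.
    apply in_map_iff in Hd. destruct Hd as [[a' d'] [Ed Hd]]; simpl in Ed; subst d.
    eapply env_fv_in; eauto.
  - intros d Hd. rewrite F1 in Hd. apply Hargs; auto.
  - intros a v Ha Hv Hf. apply F3 in Ha. apply Ha, in_app_iff; left. apply in_flat_map; eauto.
Qed.

Theorem theorem18 (t : term) (xs : list var) (us vs : list term) :
  lc t -> Forall lc us -> Forall lc vs ->
  1 <= length us -> length xs = length us -> NoDup xs ->
  (forall x u, In x xs -> In u us -> ~ In x (fv u)) ->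
  Forall SN us ->
  SN (app_list (msubst (combine xs us) t) vs) ->
  SN (app_list (mjump (combine xs us) t) vs).
Proof.
  intros Ht Hus Hvs _ Hlen ND HF HSN H.
  set (s := combine xs us) in *.
  assert (Ex : map fst s = xs) by (apply map_fst_combine; auto).
  assert (Es : map snd s = us) by (apply map_snd_combine; auto).
  assert (Hargs : forall d, In d (map snd s) -> lc_at 0 d /\ SN d).
  { rewrite Es. rewrite Forall_forall in Hus, HSN. intros d Hd. split; auto. apply lc_iff; auto. }
  destruct (rename_env_apart s t (flat_map fv vs ++ env_fv s)) as [s' [t' [F1 [F2 [F3 [F4 [F5 F6]]]]]]].
  - rewrite Ex; auto.
  - intros a b c d H1 H2. apply HF; [rewrite <- Ex|rewrite <- Es]; [eapply in_fst|eapply in_snd]; eauto.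
  - intros a b Hi. apply Hargs. eapply in_snd; eauto.
  - apply lc_iff; auto.
  - assert (G : config_ok (Config s' t' vs)).
    { apply (config_apart_ok s); auto. rewrite Forall_forall in *. intros v Hv. apply lc_iff; auto. }
    rewrite <- F5. rewrite <- F6 in H.
    apply (config_sn (Config s' t' vs)); [apply config_lt_acc|exact G].
    + exact H.
    + exact (config_ok_env_sn _ G).
Qed.
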